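(* For all complex $q$ with $|q|<1$, $$\sum_{n\ge0}\sum_{m\ge0}(-1)^m q^{\frac{n(n+3)}{2}+2nm+2m(m+1)}-\sum_{n<0}\sum_{m<0}(-1)^m q^{\frac{n(n+3)}{2}+2nm+2m(m+1)}=\frac{2(q^2;q^2)_\infty}{(1+q)(q;q^2)_\infty}-\frac{(q^2;q^2)_\infty}{(1+q)(-q^2;q^2)_\infty},$$ where the second double sum runs over all pairs of negative integers $n,m$.
   Context: For $n\in\mathbb N_0\cup\{\infty\}$, $(a;q)_n:=\prod_{j=0}^{n-1}(1-aq^j)$. *)

From Stdlib Require Import Reals ZArith.
Open Scope R_scope.

Definition Cx : Type := (R * R)%type.
Definition RtoC (x : R) : Cx := (x, 0).
Definition Czero : Cx := (0, 0).
Definition Cone : Cx := (1, 0).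
Definition Cadd (z w : Cx) : Cx := (fst z + fst w, snd z + snd w).
Definition Copp (z : Cx) : Cx := (- fst z, - snd z).
Definition Csub (z w : Cx) : Cx := Cadd z (Copp w).
Definition Cmul (z w : Cx) : Cx :=
  (fst z * fst w - snd z * snd w, fst z * snd w + snd z * fst w).
Definition Cnorm (z : Cx) : R := sqrt (fst z * fst z + snd z * snd z).
(** Multiplicative inverse (total; inverse of 0 is 0). *)
Definition Cinv (z : Cx) : Cx :=
  let d := fst z * fst z + snd z * snd z in (fst z / d, - snd z / d).
Definition Cdiv (z w : Cx) : Cx := Cmul z (Cinv w).

Fixpoint Cpow (z : Cx) (n : nat) : Cx :=
  match n with O => Cone | S k => Cmul z (Cpow z k) end.

Definition CpowZ (z : Cx) (k : Z) : Cx :=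
  match k with
  | Z0 => Cone
  | Zpos p => Cpow z (Pos.to_nat p)
  | Zneg p => Cinv (Cpow z (Pos.to_nat p))
  end.

Fixpoint Csum (f : nat -> Cx) (N : nat) : Cx :=
  match N with O => Czero | S k => Cadd (Csum f k) (f k) end.
Fixpoint Cprod (f : nat -> Cx) (N : nat) : Cx :=
  match N with O => Cone | S k => Cmul (Cprod f k) (f k) end.

Definition Ccv (u : nat -> Cx) (l : Cx) : Prop :=
  forall eps : R, eps > 0 ->
    exists N : nat, forall n : nat, (n >= N)%nat -> Cnorm (Csub (u n) l) < eps.

Definition qpoch (a q : Cx) (n : nat) : Cx :=
  Cprod (fun j => Csub Cone (Cmul a (Cpow q j))) n.

(** (a;q)_oo = l : the partial products converge to l. *)
Definition qpoch_inf_is (a q l : Cx) : Prop := Ccv (qpoch a q) l.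

(** The exponent n(n+3)/2 + 2nm + 2m(m+1) (n(n+3) is always even). *)
Definition expo (n m : Z) : Z :=
  (n * (n + 3) / 2 + 2 * n * m + 2 * m * (m + 1))%Z.

Definition term (q : Cx) (n m : Z) : Cx :=
  Cmul (CpowZ (Copp Cone) m) (CpowZ q (expo n m)).

(** Partial sum over the square 0 <= n,m < N of the first double sum,
    minus the partial sum over -N <= n,m <= -1 of the second one. *)
Definition partial_diff (q : Cx) (N : nat) : Cx :=
  Csub
    (Csum (fun n => Csum (fun m => term q (Z.of_nat n) (Z.of_nat m)) N) N)
    (Csum (fun n => Csum (fun m =>
        term q (- Z.of_nat (S n))%Z (- Z.of_nat (S m))%Z) N) N).

From Pilot Require Import Defs.
From Stdlib Require Import Reals ZArith Lra Lia.
From Coquelicot Require Import Coquelicot.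

(* Grouping the terms of both double sums by the weight r = n + 2m, the r-th
   group multiplied by 1 + q telescopes, and summing over r leaves
   2 sum_(k>=0) q^(k(k+1)/2) - sum_(j in Z) (-1)^j q^(2j^2) up to terms that
   vanish in the limit.  Gauss's identities
     sum_(k>=0) q^(k(k+1)/2) = (q^2;q^2)_oo / (q;q^2)_oo,
     sum_(j in Z) (-1)^j q^(2j^2) = (q^2;q^2)_oo / (-q^2;q^2)_oo
   are specialisations of Jacobi's triple product
     (p;p)_oo (-z;p)_oo (-p/z;p)_oo = sum_(k in Z) z^k p^(k(k-1)/2),
   which is the limit, by a Tannery (dominated convergence) argument, of its
   finite form
     (-z;p)_n (-p/z;p)_n = sum_(-n<=k<=n) [2n, n+k]_p z^k p^(k(k-1)/2)
   with Gaussian binomial coefficients [2n, n+k]_p -> 1/(p;p)_oo.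
   Summing over squares instead of the triangles n + 2m < 2N changes the
   partial sums by O(|q|^(N/2)). *)

Open Scope C_scope.

(** * Complex numbers *)

(* The complex numbers of [Defs] are Coquelicot's [C]; all operations agree
   definitionally except powers, inverses and the norm. *)

Lemma CpowE (z : C) n : Defs.Cpow z n = z ^ n.
Proof. induction n as [|n IH]; [reflexivity|]. simpl. now rewrite IH. Qed.

Lemma CinvE (z : C) : Defs.Cinv z = / z.
Proof. unfold Defs.Cinv, Cinv. simpl. f_equal; f_equal; ring. Qed.

Lemma CdivE (z w : C) : Defs.Cdiv z w = z / w.
Proof. unfold Defs.Cdiv. now rewrite CinvE. Qed.

Lemma CnormE (z : C) : Cnorm z = Cmod z.
Proof. unfold Cnorm, Cmod. f_equal. simpl. ring. Qed.

(* [Csum] and [Cprod] take values in [Cx], which is [C] up to unfolding, and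
   [ring] reads the carrier off the type of the equation and of its left-hand
   side; [Cring] retries at the other of the two types. *)
Definition Cx_field_theory :
  Field_theory.field_theory (R := Cx) (RtoC 0) (RtoC 1) Cplus Cmult Cminus Copp Cdiv Cinv eq :=
  C_field_theory.
Add Field Cx_field : Cx_field_theory.

Ltac Cring :=
  first [ ring
        | change (@eq Cx) with (@eq C); ring
        | change (@eq C) with (@eq Cx); ring ].

Lemma Cmult_eq_reg_l (a x y : C) : a <> 0 -> a * x = a * y -> x = y.
Proof.
  intros Ha H.
  transitivity (/ a * (a * x)); [field; exact Ha|].
  rewrite H. field. exact Ha.
Qed.

Lemma Cmod_m1_pow k : Cmod ((-1) ^ k) = 1%R.
Proof. rewrite Cmod_pow, Cmod_R, Rabs_left by lra. replace (- -1)%R with 1%R by lra. apply pow1. Qed.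

Lemma Cinv_m1_pow k : / (-1) ^ k = (-1) ^ k.
Proof.
  assert (Hsq : (-1) ^ k * (-1) ^ k = 1).
  { rewrite <- Cpow_mult_l. replace (-1 * -1) with (RtoC 1) by ring. apply Cpow_1_l. }
  assert (Hnz : (-1) ^ k <> 0).
  { apply Cpow_nz. intro E. apply (f_equal fst) in E. simpl in E. lra. }
  apply (Cmult_eq_reg_l ((-1) ^ k)); [exact Hnz|].
  rewrite Hsq. field. exact Hnz.
Qed.

Lemma Cplus_1_neq_0 (q : C) : Cmod q < 1 -> 1 + q <> 0.
Proof.
  intros Hq E.
  replace q with (-1 : C) in Hq by (rewrite <- (Cplus_0_r (-1)), <- E; ring).
  rewrite Cmod_R, Rabs_left in Hq; lra.
Qed.

(** * Finite sums and products *)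

Lemma Csum_0 (f : nat -> C) : Csum f 0 = (0 : C).
Proof. reflexivity. Qed.

Lemma Cprod_0 (f : nat -> C) : Cprod f 0 = (1 : C).
Proof. reflexivity. Qed.

Lemma Csum_S (f : nat -> C) n : Csum f (S n) = Csum f n + f n.
Proof. reflexivity. Qed.

Lemma Cprod_S (f : nat -> C) n : Cprod f (S n) = Cprod f n * f n.
Proof. reflexivity. Qed.

Lemma Csum_ext (f g : nat -> C) n : (forall k, (k < n)%nat -> f k = g k) -> Csum f n = Csum g n.
Proof.
  induction n as [|n IH]; intros H; [reflexivity|].
  rewrite !Csum_S, IH, H by first [lia | intros; apply H; lia]. reflexivity.
Qed.

Lemma Cprod_ext (f g : nat -> C) n : (forall k, (k < n)%nat -> f k = g k) -> Cprod f n = Cprod g n.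
Proof.
  induction n as [|n IH]; intros H; [reflexivity|].
  rewrite !Cprod_S, IH, H by first [lia | intros; apply H; lia]. reflexivity.
Qed.

Lemma Csum_plus (f g : nat -> C) n : Csum (fun k => f k + g k) n = Csum f n + Csum g n.
Proof. induction n as [|n IH]; [rewrite !Csum_0; Cring|]. rewrite !Csum_S, IH. Cring. Qed.

Lemma Csum_minus (f g : nat -> C) n : Csum (fun k => f k - g k) n = Csum f n - Csum g n.
Proof. induction n as [|n IH]; [rewrite !Csum_0; Cring|]. rewrite !Csum_S, IH. Cring. Qed.

Lemma Csum_mult_l c (f : nat -> C) n : Csum (fun k => c * f k) n = c * Csum f n.
Proof. induction n as [|n IH]; [rewrite !Csum_0; Cring|]. rewrite !Csum_S, IH. Cring. Qed.

Lemma Cprod_mult (f g : nat -> C) n : Cprod (fun k => f k * g k) n = Cprod f n * Cprod g n.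
Proof. induction n as [|n IH]; [rewrite !Cprod_0; Cring|]. rewrite !Cprod_S, IH. Cring. Qed.

Lemma Csum_eq0 (f : nat -> C) n : (forall k, (k < n)%nat -> f k = 0) -> Csum f n = (0 : C).
Proof.
  induction n as [|n IH]; intros H; [reflexivity|].
  rewrite Csum_S, IH, H by first [lia | intros; apply H; lia]. Cring.
Qed.

Lemma Csum_Sl (f : nat -> C) n : Csum f (S n) = f O + Csum (fun k => f (S k)) n.
Proof.
  induction n as [|n IH]; [rewrite Csum_S, !Csum_0; Cring|].
  rewrite Csum_S, IH, Csum_S. Cring.
Qed.

Lemma Cprod_Sl (f : nat -> C) n : Cprod f (S n) = f O * Cprod (fun k => f (S k)) n.
Proof.
  induction n as [|n IH]; [rewrite Cprod_S, !Cprod_0; Cring|].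
  rewrite Cprod_S, IH, Cprod_S. Cring.
Qed.

Lemma Csum_add (f : nat -> C) a b : Csum f (a + b) = Csum f a + Csum (fun k => f (a + k)%nat) b.
Proof.
  induction b as [|b IH]; [rewrite Nat.add_0_r, Csum_0; Cring|].
  rewrite Nat.add_succ_r, !Csum_S, IH. Cring.
Qed.

Lemma Cprod_add (f : nat -> C) a b : Cprod f (a + b) = Cprod f a * Cprod (fun k => f (a + k)%nat) b.
Proof.
  induction b as [|b IH]; [rewrite Nat.add_0_r, Cprod_0; Cring|].
  rewrite Nat.add_succ_r, !Cprod_S, IH. Cring.
Qed.

Lemma Csum_rev (f : nat -> C) n : Csum f n = Csum (fun k => f (n - S k)%nat) n.
Proof.
  induction n as [|n IH]; [reflexivity|].
  rewrite Csum_S, Csum_Sl, IH, Cplus_comm.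
  replace (S n - 1)%nat with n by lia. reflexivity.
Qed.

Lemma Cprod_rev (f : nat -> C) n : Cprod f n = Cprod (fun k => f (n - S k)%nat) n.
Proof.
  induction n as [|n IH]; [reflexivity|].
  rewrite Cprod_S, Cprod_Sl, IH, Cmult_comm.
  replace (S n - 1)%nat with n by lia. reflexivity.
Qed.

Lemma Cprod_double (f : nat -> C) N : Cprod f (2 * N) = Cprod (fun k => f (2 * k)%nat * f (S (2 * k))) N.
Proof.
  induction N as [|N IH]; [reflexivity|].
  replace (2 * S N)%nat with (S (S (2 * N))) by lia.
  rewrite !Cprod_S, IH. Cring.
Qed.

Lemma Csum_comm (f : nat -> nat -> C) a b :
  Csum (fun i => Csum (fun j => f i j) b) a = Csum (fun j => Csum (fun i => f i j) a) b.
Proof.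
  induction a as [|a IH].
  - symmetry. now apply Csum_eq0.
  - now rewrite Csum_S, IH, <- Csum_plus.
Qed.

Lemma Csum_ltb (f : nat -> C) N M : (N <= M)%nat ->
  Csum (fun k => if Nat.ltb k N then f k else (0 : C)) M = Csum f N.
Proof.
  intros H. replace M with (N + (M - N))%nat by lia.
  rewrite Csum_add, (Csum_eq0 _ (M - N)), Cplus_0_r.
  - apply Csum_ext. intros k Hk. destruct (Nat.ltb_spec k N); [reflexivity | lia].
  - intros k _. destruct (Nat.ltb_spec (N + k) N); [lia | reflexivity].
Qed.

Lemma Csum_shift_index (f : nat -> C) a M :
  Csum (fun r => if Nat.leb a r then f (r - a)%nat else (0 : C)) M =
  Csum (fun n => if Nat.ltb (n + a) M then f n else (0 : C)) M.
Proof.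
  destruct (Nat.le_gt_cases a M) as [HaM|HaM].
  - replace M with (a + (M - a))%nat at 1 by lia.
    rewrite Csum_add, (Csum_eq0 _ a), Cplus_0_l.
    2: { intros k Hk. destruct (Nat.leb_spec a k); [lia | reflexivity]. }
    transitivity (Csum f (M - a)).
    + apply Csum_ext. intros k _. destruct (Nat.leb_spec a (a + k)); [f_equal; lia | lia].
    + rewrite <- (Csum_ltb f (M - a) M) by lia.
      apply Csum_ext. intros k _.
      destruct (Nat.ltb_spec (k + a) M), (Nat.ltb_spec k (M - a)); solve [reflexivity | lia].
  - rewrite !Csum_eq0; [reflexivity| |].
    + intros k Hk. destruct (Nat.ltb_spec (k + a) M); [lia | reflexivity].
    + intros k Hk. destruct (Nat.leb_spec a k); [lia | reflexivity].
Qed.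

(** * Real sums, products and geometric bounds *)

Fixpoint Rsum (f : nat -> R) (n : nat) : R :=
  match n with O => 0%R | S k => (Rsum f k + f k)%R end.

Fixpoint Rprod (f : nat -> R) (n : nat) : R :=
  match n with O => 1%R | S k => (Rprod f k * f k)%R end.

Local Open Scope R_scope.

Lemma Rsum_ext f g n : (forall k, (k < n)%nat -> f k = g k) -> Rsum f n = Rsum g n.
Proof.
  induction n as [|n IH]; intros H; simpl; [reflexivity|].
  rewrite IH, H by first [lia | intros; apply H; lia]. reflexivity.
Qed.

Lemma Rsum_le f g n : (forall k, (k < n)%nat -> f k <= g k) -> Rsum f n <= Rsum g n.
Proof.
  induction n as [|n IH]; intros H; simpl; [lra|].
  apply Rplus_le_compat; [apply IH; intros; apply H; lia | apply H; lia].
Qed.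

Lemma Rsum_nonneg f n : (forall k, (k < n)%nat -> 0 <= f k) -> 0 <= Rsum f n.
Proof.
  intros H. replace 0 with (Rsum (fun _ => 0) n).
  - now apply Rsum_le.
  - clear H. induction n as [|n IH]; simpl; [reflexivity | rewrite IH; ring].
Qed.

Lemma Rsum_mult_l c f n : Rsum (fun k => c * f k) n = c * Rsum f n.
Proof. induction n as [|n IH]; simpl; [ring|]. rewrite IH. ring. Qed.

Lemma Cmod_Csum_le (f : nat -> C) n : Cmod (Csum f n) <= Rsum (fun k => Cmod (f k)) n.
Proof.
  induction n as [|n IH]; simpl Rsum.
  - rewrite Csum_0, Cmod_0. lra.
  - rewrite Csum_S. eapply Rle_trans; [apply Cmod_triangle | lra].
Qed.

Lemma Rsum_geom_le b n : 0 <= b < 1 -> Rsum (fun k => b ^ k) n <= / (1 - b).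
Proof.
  intros Hb.
  assert (Hsum : (1 - b) * Rsum (fun k => b ^ k) n = 1 - b ^ n).
  { induction n as [|n IH]; simpl; [ring|]. rewrite Rmult_plus_distr_l, IH. ring. }
  apply (Rmult_le_reg_l (1 - b)); [lra|].
  rewrite Hsum, Rinv_r by lra.
  pose proof (pow_le b n). lra.
Qed.

Lemma Rsum_geom_tail_le c b a n : 0 <= c -> 0 <= b < 1 ->
  Rsum (fun k => c * b ^ (a + k)) n <= c * b ^ a / (1 - b).
Proof.
  intros Hc Hb.
  rewrite (Rsum_ext _ (fun k => (c * b ^ a) * b ^ k)) by (intros; rewrite pow_add; ring).
  rewrite Rsum_mult_l. unfold Rdiv.
  apply Rmult_le_compat_l; [apply Rmult_le_pos; [exact Hc | apply pow_le; lra]|].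
  now apply Rsum_geom_le.
Qed.

Lemma pow_le_one x k : 0 <= x <= 1 -> x ^ k <= 1.
Proof.
  intros Hx. induction k as [|k IH]; simpl; [lra|].
  pose proof (pow_le x k). nra.
Qed.

Lemma pow_le_antimono r a b : 0 <= r <= 1 -> (a <= b)%nat -> r ^ b <= r ^ a.
Proof.
  intros Hr Hab. replace b with (a + (b - a))%nat by lia. rewrite pow_add.
  pose proof (pow_le r a). pose proof (pow_le r (b - a)).
  pose proof (pow_le_one r (b - a) Hr). nra.
Qed.

Lemma mult_pow_lt_eventually K b eps : 0 <= b < 1 -> eps > 0 ->
  exists N, forall n, (n >= N)%nat -> K * b ^ n < eps.
Proof.
  intros Hb He.
  assert (HK : 0 < Rabs K + 1) by (pose proof (Rabs_pos K); lra).
  destruct (pow_lt_1_zero b) with (y := eps / (Rabs K + 1)) as [N HN].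
  - rewrite Rabs_right; lra.
  - apply Rdiv_lt_0_compat; lra.
  - exists N. intros n Hn. specialize (HN n Hn).
    rewrite Rabs_right in HN by (apply Rle_ge, pow_le; lra).
    apply Rle_lt_trans with ((Rabs K + 1) * b ^ n).
    + apply Rmult_le_compat_r; [apply pow_le; lra | pose proof (Rle_abs K); lra].
    + apply (Rmult_lt_compat_l (Rabs K + 1)) in HN; [|exact HK].
      replace ((Rabs K + 1) * (eps / (Rabs K + 1))) with eps in HN by (field; lra). exact HN.
Qed.

Lemma Rprod_add f a b : Rprod f (a + b) = Rprod f a * Rprod (fun k => f (a + k)%nat) b.
Proof.
  induction b as [|b IH]; simpl; [rewrite Nat.add_0_r; ring|].
  rewrite Nat.add_succ_r. simpl. rewrite IH. ring.
Qed.

Lemma Rprod_nonneg f n : (forall k, 0 <= f k) -> 0 <= Rprod f n.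
Proof. intros H. induction n as [|n IH]; simpl; [lra|]. now apply Rmult_le_pos. Qed.

Lemma Rprod_pos f n : (forall k, 0 < f k) -> 0 < Rprod f n.
Proof. intros H. induction n as [|n IH]; simpl; [lra|]. now apply Rmult_lt_0_compat. Qed.

Lemma Rprod_le f g n : (forall k, 0 <= f k <= g k) -> Rprod f n <= Rprod g n.
Proof.
  intros H. induction n as [|n IH]; simpl; [lra|].
  assert (0 <= Rprod f n) by (apply Rprod_nonneg; intros k; apply H).
  specialize (H n). apply Rmult_le_compat; lra.
Qed.

Lemma Rprod_le_one f n : (forall k, 0 <= f k <= 1) -> Rprod f n <= 1.
Proof.
  intros H. replace 1 with (Rprod (fun _ => 1) n).
  - now apply Rprod_le.
  - clear H. induction n as [|n IH]; simpl; [reflexivity | rewrite IH; ring].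
Qed.

Lemma Cmod_Cprod (f : nat -> C) n : Cmod (Cprod f n) = Rprod (fun k => Cmod (f k)) n.
Proof.
  induction n as [|n IH]; simpl Rprod.
  - rewrite Cprod_0. apply Cmod_1.
  - rewrite Cprod_S, Cmod_mult, IH. reflexivity.
Qed.

Lemma Rprod_1_plus_le_exp x n : (forall k, 0 <= x k) ->
  Rprod (fun k => 1 + x k) n <= exp (Rsum x n).
Proof.
  intros H. induction n as [|n IH]; simpl; [rewrite exp_0; lra|].
  rewrite exp_plus. apply Rmult_le_compat.
  - apply Rprod_nonneg. intros k. specialize (H k). lra.
  - specialize (H n). lra.
  - exact IH.
  - apply exp_ineq1_le.
Qed.

Lemma exp_le_compat x y : x <= y -> exp x <= exp y.
Proof. intros [H | ->]; [left; now apply exp_increasing | lra]. Qed.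

Lemma Rprod_1_minus_ge y n : (forall k, 0 <= y k <= 1) ->
  1 - Rsum y n <= Rprod (fun k => 1 - y k) n.
Proof.
  intros H. induction n as [|n IH]; simpl; [lra|].
  assert (0 <= Rprod (fun k => 1 - y k) n) by (apply Rprod_nonneg; intros k; specialize (H k); lra).
  assert (0 <= Rsum y n) by (apply Rsum_nonneg; intros k _; apply H).
  pose proof (H n).
  destruct (Rle_lt_dec 1 (Rsum y n)); [nra|].
  assert ((1 - Rsum y n) * (1 - y n) <= Rprod (fun k => 1 - y k) n * (1 - y n))
    by (apply Rmult_le_compat_r; lra).
  nra.
Qed.

(** * Convergence of complex sequences *)

Definition cv (u : nat -> C) (l : C) : Prop :=
  forall eps, eps > 0 -> exists N, forall n, (n >= N)%nat -> Cmod (u n - l) < eps.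

Lemma Ccv_of_cv u l : cv u l -> Ccv u l.
Proof.
  intros H eps He. destruct (H eps He) as [N HN].
  exists N. intros n Hn. rewrite CnormE. now apply HN.
Qed.

Lemma cv_geom_rate u l K b : 0 <= b < 1 ->
  (forall n, Cmod (u n - l) <= K * b ^ n) -> cv u l.
Proof.
  intros Hb H eps He. destruct (mult_pow_lt_eventually K b eps Hb He) as [N HN].
  exists N. intros n Hn. eapply Rle_lt_trans; [apply H | now apply HN].
Qed.

Lemma cv_const c : cv (fun _ => c) c.
Proof.
  intros eps He. exists O. intros n _.
  replace (c - c)%C with (RtoC 0) by ring. rewrite Cmod_0. lra.
Qed.

Lemma cv_eventually_eq u v l :
  (exists N, forall n, (n >= N)%nat -> u n = v n) -> cv u l -> cv v l.
Proof.
  intros [N0 H0] H eps He. destruct (H eps He) as [N HN].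
  exists (max N N0). intros n Hn. rewrite <- H0 by lia. apply HN. lia.
Qed.

Lemma cv_ext u v l : (forall n, u n = v n) -> cv u l -> cv v l.
Proof. intros H. apply cv_eventually_eq. exists O. auto. Qed.

Lemma cv_of_cv_S u l : cv (fun n => u (S n)) l -> cv u l.
Proof.
  intros H eps He. destruct (H eps He) as [N HN].
  exists (S N). intros [|n] Hn; [lia|]. apply HN. lia.
Qed.

Lemma cv_comp u l (phi : nat -> nat) N0 :
  (forall n, (n - N0 <= phi n)%nat) -> cv u l -> cv (fun n => u (phi n)) l.
Proof.
  intros Hphi H eps He. destruct (H eps He) as [N HN].
  exists (N + N0)%nat. intros n Hn. apply HN. specialize (Hphi n). lia.
Qed.

Lemma cv_plus u v a b : cv u a -> cv v b -> cv (fun n => u n + v n)%C (a + b)%C.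
Proof.
  intros Hu Hv eps He.
  destruct (Hu (eps / 2)) as [N1 H1]; [lra|]. destruct (Hv (eps / 2)) as [N2 H2]; [lra|].
  exists (max N1 N2). intros n Hn.
  replace (u n + v n - (a + b))%C with ((u n - a) + (v n - b))%C by ring.
  eapply Rle_lt_trans; [apply Cmod_triangle|].
  specialize (H1 n ltac:(lia)). specialize (H2 n ltac:(lia)). lra.
Qed.

Lemma cv_opp u a : cv u a -> cv (fun n => - u n)%C (- a)%C.
Proof.
  intros Hu eps He. destruct (Hu eps He) as [N H]. exists N. intros n Hn.
  replace (- u n - - a)%C with (- (u n - a))%C by ring. rewrite Cmod_opp. auto.
Qed.

Lemma cv_minus u v a b : cv u a -> cv v b -> cv (fun n => u n - v n)%C (a - b)%C.
Proof. intros Hu Hv. exact (cv_plus _ _ _ _ Hu (cv_opp _ _ Hv)). Qed.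

Lemma cv_bounded u a : cv u a -> exists M, 0 < M /\ forall n, Cmod (u n) <= M.
Proof.
  intros Hu. destruct (Hu 1) as [N HN]; [lra|].
  assert (Hinit : exists M0, 0 <= M0 /\ forall n, (n < N)%nat -> Cmod (u n) <= M0).
  { clear HN. induction N as [|N [M1 [H1 H2]]].
    - exists 0. split; [lra | intros; lia].
    - exists (Rmax M1 (Cmod (u N))). split; [eapply Rle_trans; [apply H1 | apply Rmax_l]|].
      intros n Hn. destruct (Nat.eq_dec n N) as [->|]; [apply Rmax_r|].
      eapply Rle_trans; [apply H2; lia | apply Rmax_l]. }
  destruct Hinit as [M0 [HM0 HM]].
  exists (M0 + Cmod a + 1). pose proof (Cmod_ge_0 a). split; [lra|].
  intros n. destruct (le_lt_dec N n) as [Hn|Hn].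
  - specialize (HN n Hn). replace (u n) with ((u n - a) + a)%C by ring.
    eapply Rle_trans; [apply Cmod_triangle | lra].
  - specialize (HM n Hn). lra.
Qed.

Lemma cv_mult u v a b : cv u a -> cv v b -> cv (fun n => u n * v n)%C (a * b)%C.
Proof.
  intros Hu Hv. destruct (cv_bounded u a Hu) as [M [HM HMb]].
  intros eps He. pose proof (Cmod_ge_0 b).
  set (e1 := eps / (2 * (Cmod b + 1))). set (e2 := eps / (2 * M)).
  destruct (Hu e1) as [N1 H1]; [unfold e1; apply Rdiv_lt_0_compat; lra|].
  destruct (Hv e2) as [N2 H2]; [unfold e2; apply Rdiv_lt_0_compat; lra|].
  exists (max N1 N2). intros n Hn.
  replace (u n * v n - a * b)%C with (u n * (v n - b) + (u n - a) * b)%C by ring.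
  eapply Rle_lt_trans; [apply Cmod_triangle|]. rewrite !Cmod_mult.
  specialize (H1 n ltac:(lia)). specialize (H2 n ltac:(lia)).
  pose proof (Cmod_ge_0 (u n - a)). pose proof (Cmod_ge_0 (v n - b)). specialize (HMb n).
  assert (M * e2 = eps / 2) by (unfold e2; field; lra).
  assert (e1 * (Cmod b + 1) = eps / 2) by (unfold e1; field; lra).
  pose proof (Cmod_ge_0 (u n)).
  assert (Cmod (u n) * Cmod (v n - b) <= M * e2) by (apply Rmult_le_compat; lra).
  assert (Cmod (u n - a) * Cmod b < e1 * (Cmod b + 1)).
  { apply Rle_lt_trans with (Cmod (u n - a) * (Cmod b + 1)); [nra|].
    apply Rmult_lt_compat_r; lra. }
  lra.
Qed.

Lemma cv_mult_l c u a : cv u a -> cv (fun n => c * u n)%C (c * a)%C.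
Proof. exact (cv_mult _ _ _ _ (cv_const c)). Qed.

Lemma cv_unique u a b : cv u a -> cv u b -> a = b.
Proof.
  intros Ha Hb. destruct (Ceq_dec (a - b) 0) as [E|E].
  - replace a with ((a - b) + b)%C by ring. rewrite E. ring.
  - apply Cmod_gt_0 in E.
    destruct (Ha (Cmod (a - b) / 2)) as [N1 H1]; [lra|].
    destruct (Hb (Cmod (a - b) / 2)) as [N2 H2]; [lra|].
    set (n := max N1 N2). specialize (H1 n ltac:(lia)). specialize (H2 n ltac:(lia)).
    pose proof (Cmod_triangle (- (u n - a)) (u n - b)) as T.
    rewrite Cmod_opp in T. replace (- (u n - a) + (u n - b))%C with (a - b)%C in T by ring.
    lra.
Qed.

Lemma cv_eventually_const_unique u c l :
  cv u l -> (exists N, forall n, (n >= N)%nat -> u n = c) -> l = c.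
Proof.
  intros Hl Hc. apply (cv_unique u); [exact Hl|].
  apply (cv_eventually_eq (fun _ => c)); [|apply cv_const].
  destruct Hc as [N HN]. exists N. intros. symmetry. auto.
Qed.

Lemma cv_inv u a : cv u a -> a <> 0%C -> cv (fun n => / u n)%C (/ a)%C.
Proof.
  intros Hu Ha. apply Cmod_gt_0 in Ha as Hm.
  destruct (Hu (Cmod a / 2)) as [N0 H0]; [lra|].
  assert (Hbelow : forall n, (n >= N0)%nat -> Cmod a / 2 <= Cmod (u n)).
  { intros n Hn. specialize (H0 n Hn). pose proof (Cmod_triangle (u n) (- (u n - a))) as T.
    replace (u n + - (u n - a))%C with a in T by ring. rewrite Cmod_opp in T. lra. }
  intros eps He. destruct (Hu (eps * (Cmod a * Cmod a / 2))) as [N1 H1].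
  { apply Rmult_lt_0_compat; [lra | nra]. }
  exists (max N0 N1). intros n Hn. specialize (Hbelow n ltac:(lia)).
  assert (Hun : u n <> 0%C) by (intro E; rewrite E, Cmod_0 in Hbelow; lra).
  replace (/ u n - / a)%C with ((a - u n) / (u n * a))%C by (field; auto).
  rewrite Cmod_div, Cmod_mult by (apply Cmult_neq_0; auto).
  assert (Cmod (a - u n) < eps * (Cmod a * Cmod a / 2)).
  { replace (a - u n)%C with (- (u n - a))%C by ring. rewrite Cmod_opp. apply H1. lia. }
  assert (Cmod a * Cmod a / 2 <= Cmod (u n) * Cmod a) by nra.
  apply (Rmult_lt_reg_r (Cmod (u n) * Cmod a)); [nra|].
  unfold Rdiv. rewrite Rmult_assoc, Rinv_l, Rmult_1_r by nra.
  apply Rlt_le_trans with (eps * (Cmod a * Cmod a / 2)); [assumption|].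
  apply Rmult_le_compat_l; lra.
Qed.

Lemma cv_Csum (f : nat -> nat -> C) (g : nat -> C) K :
  (forall k, (k < K)%nat -> cv (fun n => f n k) (g k)) -> cv (fun n => Csum (f n) K) (Csum g K).
Proof.
  induction K as [|K IH]; intros H.
  - apply (cv_ext (fun _ => Csum g 0)); [reflexivity | apply cv_const].
  - apply cv_plus; [apply IH; intros; apply H; lia | apply H; lia].
Qed.

Lemma cv_Cmod_le u a B N : cv u a -> (forall n, (n >= N)%nat -> Cmod (u n) <= B) -> Cmod a <= B.
Proof.
  intros Hu H. destruct (Rle_lt_dec (Cmod a) B) as [|Hlt]; [assumption|].
  destruct (Hu (Cmod a - B)) as [M HM]; [lra|].
  specialize (HM (max M N) ltac:(lia)). specialize (H (max M N) ltac:(lia)).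
  pose proof (Cmod_triangle (u (max M N)) (- (u (max M N) - a))) as T.
  replace (u (max M N) + - (u (max M N) - a))%C with a in T by ring. rewrite Cmod_opp in T.
  lra.
Qed.

Lemma cv_Cmod_ge u a B : cv u a -> (forall n, B <= Cmod (u n)) -> B <= Cmod a.
Proof.
  intros Hu H. destruct (Rle_lt_dec B (Cmod a)) as [|Hlt]; [assumption|].
  destruct (Hu (B - Cmod a)) as [N HN]; [lra|].
  specialize (HN N (le_n N)). specialize (H N).
  pose proof (Cmod_triangle (u N - a) a) as T. replace (u N - a + a)%C with (u N) in T by ring.
  lra.
Qed.

Lemma Cmod_le_Rabs_fst_snd (z : C) : Cmod z <= Rabs (fst z) + Rabs (snd z).
Proof.
  destruct z as [x y]. simpl.
  replace (x, y) with (RtoC x + RtoC y * Ci)%C by (apply injective_projections; simpl; ring).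
  eapply Rle_trans; [apply Cmod_triangle|].
  rewrite Cmod_mult, !Cmod_R, Cmod_Ci. lra.
Qed.

Lemma Rcv_of_geom_increments (x : nat -> R) c b : 0 <= b < 1 ->
  (forall n, Rabs (x (S n) - x n) <= c * b ^ n) -> exists l, Un_cv x l.
Proof.
  intros Hb H.
  assert (Hc : 0 <= c) by (specialize (H O); simpl in H; pose proof (Rabs_pos (x 1%nat - x O)); lra).
  assert (Htail : forall n k, Rabs (x (n + k)%nat - x n) <= c * b ^ n / (1 - b)).
  { intros n k. eapply Rle_trans; [|apply (Rsum_geom_tail_le c b n k Hc Hb)].
    induction k as [|k IH]; simpl.
    - rewrite Nat.add_0_r, Rminus_diag, Rabs_R0. lra.
    - rewrite Nat.add_succ_r.
      replace (x (S (n + k)) - x n) with ((x (S (n + k)) - x (n + k)%nat) + (x (n + k)%nat - x n)) by ring.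
      eapply Rle_trans; [apply Rabs_triang|]. specialize (H (n + k)%nat). lra. }
  assert (Hcauchy : Cauchy_crit x).
  { intros eps He. destruct (mult_pow_lt_eventually (c / (1 - b)) b (eps / 2) Hb) as [N HN]; [lra|].
    exists N. intros n m Hn Hm. unfold Rdist.
    specialize (HN N (le_n N)).
    replace (c / (1 - b) * b ^ N) with (c * b ^ N / (1 - b)) in HN by (field; lra).
    pose proof (Htail N (n - N)%nat) as A1. pose proof (Htail N (m - N)%nat) as A2.
    replace (N + (n - N))%nat with n in A1 by lia. replace (N + (m - N))%nat with m in A2 by lia.
    replace (x n - x m) with ((x n - x N) - (x m - x N)) by ring.
    eapply Rle_lt_trans; [apply Rabs_triang|]. rewrite Rabs_Ropp. lra. }
  destruct (Rcomplete.R_complete x Hcauchy) as [l Hl]. now exists l.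
Qed.

Lemma cv_of_components u a b :
  Un_cv (fun n => fst (u n)) a -> Un_cv (fun n => snd (u n)) b -> cv u (a, b).
Proof.
  intros Ha Hb eps He.
  destruct (Ha (eps / 2)) as [N1 H1]; [lra|]. destruct (Hb (eps / 2)) as [N2 H2]; [lra|].
  exists (max N1 N2). intros n Hn.
  eapply Rle_lt_trans; [apply Cmod_le_Rabs_fst_snd|].
  specialize (H1 n ltac:(lia)). specialize (H2 n ltac:(lia)). unfold R_dist, Rminus in *.
  simpl. lra.
Qed.

Lemma cv_of_geom_increments (u : nat -> C) c b : 0 <= b < 1 ->
  (forall n, Cmod (u (S n) - u n) <= c * b ^ n) -> exists l, cv u l.
Proof.
  intros Hb H.
  destruct (Rcv_of_geom_increments (fun n => fst (u n)) c b Hb) as [l1 H1].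
  { intros n. eapply Rle_trans; [|apply (H n)].
    eapply Rle_trans; [|apply Rmax_Cmod]. apply Rmax_l. }
  destruct (Rcv_of_geom_increments (fun n => snd (u n)) c b Hb) as [l2 H2].
  { intros n. eapply Rle_trans; [|apply (H n)].
    eapply Rle_trans; [|apply Rmax_Cmod]. apply Rmax_r. }
  exists (l1, l2). now apply cv_of_components.
Qed.

Lemma cv_series_geom_bound (w : nat -> C) K s : 0 <= s < 1 ->
  (forall k, Cmod (w k) <= K * s ^ k) -> exists L, cv (Csum w) L.
Proof.
  intros Hs H. apply (cv_of_geom_increments _ K s Hs).
  intros n. rewrite Csum_S. replace (Csum w n + w n - Csum w n)%C with (w n) by Cring. apply H.
Qed.

(** * Infinite q-Pochhammer products *)

Definition qp (a b : C) (n : nat) : C := Cprod (fun j => 1 - a * b ^ j)%C n.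

Lemma qpochE (a b : C) n : qpoch a b n = qp a b n.
Proof. apply Cprod_ext. intros k _. now rewrite CpowE. Qed.

Lemma qp_S a b n : qp a b (S n) = (qp a b n * (1 - a * b ^ n))%C.
Proof. reflexivity. Qed.

Lemma qp_0_l b n : qp 0 b n = 1%C.
Proof.
  induction n as [|n IH]; [reflexivity|].
  rewrite qp_S, IH. ring.
Qed.

Lemma qp_bounded a b : Cmod b < 1 -> exists K, 0 < K /\ forall n, Cmod (qp a b n) <= K.
Proof.
  intros Hb. pose proof (Cmod_ge_0 a). pose proof (Cmod_ge_0 b).
  exists (exp (Cmod a / (1 - Cmod b))). split; [apply exp_pos|]. intros n.
  unfold qp. rewrite Cmod_Cprod.
  eapply Rle_trans.
  { apply (Rprod_le _ (fun k => 1 + Cmod a * Cmod b ^ k)). intros k. split; [apply Cmod_ge_0|].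
    eapply Rle_trans; [apply Cmod_triangle|].
    rewrite Cmod_opp, Cmod_1, Cmod_mult, Cmod_pow. lra. }
  eapply Rle_trans; [apply Rprod_1_plus_le_exp; intros; apply Rmult_le_pos; auto; apply pow_le; auto|].
  apply exp_le_compat.
  rewrite (Rsum_ext _ (fun k => Cmod a * Cmod b ^ (0 + k))) by reflexivity.
  replace (Cmod a / (1 - Cmod b)) with (Cmod a * Cmod b ^ 0 / (1 - Cmod b)) by (simpl; field; lra).
  apply Rsum_geom_tail_le; lra.
Qed.

Lemma qp_cv a b : Cmod b < 1 -> exists P, cv (qp a b) P.
Proof.
  intros Hb. destruct (qp_bounded a b Hb) as [K [HK HKb]].
  apply (cv_of_geom_increments _ (K * Cmod a) (Cmod b)); [split; [apply Cmod_ge_0 | exact Hb]|].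
  intros n. rewrite qp_S.
  replace (qp a b n * (1 - a * b ^ n) - qp a b n)%C with (- (qp a b n * (a * b ^ n)))%C by ring.
  rewrite Cmod_opp, !Cmod_mult, Cmod_pow, <- Rmult_assoc.
  apply Rmult_le_compat_r; [apply pow_le, Cmod_ge_0|].
  apply Rmult_le_compat_r; [apply Cmod_ge_0 | apply HKb].
Qed.

Lemma Rprod_1_minus_geom_lower al be : 0 <= al < 1 -> 0 <= be < 1 ->
  exists c, 0 < c /\ forall n, c <= Rprod (fun j => 1 - al * be ^ j) n.
Proof.
  intros Ha Hb. set (f := fun j => 1 - al * be ^ j).
  assert (Hf : forall j, 0 < f j <= 1).
  { intros j. unfold f. pose proof (pow_le be j). pose proof (pow_le_one be j). nra. }
  (* Up to some J the product is positive; beyond J the tail sum of [al be^j] is at most 1/2. *)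
  destruct (mult_pow_lt_eventually (al / (1 - be)) be (1 / 2) Hb) as [J HJ]; [lra|].
  specialize (HJ J (le_n J)).
  replace (al / (1 - be) * be ^ J) with (al * be ^ J / (1 - be)) in HJ by (field; lra).
  set (c0 := Rprod f J). assert (Hc0 : 0 < c0) by (apply Rprod_pos; intros; apply Hf).
  exists (c0 / 2). split; [lra|]. intros n.
  destruct (le_lt_dec J n) as [HJn|HnJ].
  - replace n with (J + (n - J))%nat by lia. rewrite Rprod_add. fold c0.
    assert (1 / 2 <= Rprod (fun k => f (J + k)%nat) (n - J)).
    { eapply Rle_trans; [|apply (Rprod_1_minus_ge (fun k => al * be ^ (J + k)))].
      - pose proof (Rsum_geom_tail_le al be J (n - J) ltac:(lra) Hb). lra.
      - intros k. specialize (Hf (J + k)%nat). unfold f in Hf. pose proof (pow_le be (J + k)). nra. }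
    nra.
  - enough (c0 <= Rprod f n) by lra.
    unfold c0. replace J with (n + (J - n))%nat by lia. rewrite Rprod_add.
    assert (0 <= Rprod f n) by (apply Rprod_nonneg; intros; pose proof (Hf k); lra).
    assert (Rprod (fun k => f (n + k)%nat) (J - n) <= 1)
      by (apply Rprod_le_one; intros; pose proof (Hf (n + k)%nat); lra).
    assert (0 <= Rprod (fun k => f (n + k)%nat) (J - n))
      by (apply Rprod_nonneg; intros; pose proof (Hf (n + k)%nat); lra).
    nra.
Qed.

Lemma qp_lower_bound a b : Cmod a < 1 -> Cmod b < 1 ->
  exists c, 0 < c /\ forall n, c <= Cmod (qp a b n).
Proof.
  intros Ha Hb. pose proof (Cmod_ge_0 a) as Ha0. pose proof (Cmod_ge_0 b) as Hb0.
  destruct (Rprod_1_minus_geom_lower (Cmod a) (Cmod b)) as [c [Hc Hlow]]; [lra | lra |].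
  exists c. split; [exact Hc|]. intros n. eapply Rle_trans; [apply (Hlow n)|].
  unfold qp. rewrite Cmod_Cprod. apply Rprod_le. intros k.
  pose proof (pow_le (Cmod b) k). pose proof (pow_le_one (Cmod b) k ltac:(lra)).
  split; [nra|].
  pose proof (Cmod_triangle (1 - a * b ^ k) (a * b ^ k)) as T.
  replace (1 - a * b ^ k + a * b ^ k)%C with (RtoC 1) in T by ring.
  rewrite Cmod_1, Cmod_mult, Cmod_pow in T. lra.
Qed.

Lemma qp_neq_0 a b n : Cmod a < 1 -> Cmod b < 1 -> qp a b n <> 0%C.
Proof.
  intros Ha Hb E. destruct (qp_lower_bound a b Ha Hb) as [c [Hc H]].
  specialize (H n). rewrite E, Cmod_0 in H. lra.
Qed.

Lemma qp_lim_neq_0 a b P : Cmod a < 1 -> Cmod b < 1 -> cv (qp a b) P -> P <> 0%C.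
Proof.
  intros Ha Hb HP E. destruct (qp_lower_bound a b Ha Hb) as [c [Hc H]].
  pose proof (cv_Cmod_ge _ _ _ HP H) as HPc. rewrite E, Cmod_0 in HPc. lra.
Qed.

(** * Gaussian binomial coefficients *)

Fixpoint choose2 (n : nat) : nat := match n with O => O | S k => (choose2 k + k)%nat end.

Lemma choose2_add a b : choose2 (a + b) = (choose2 a + choose2 b + a * b)%nat.
Proof.
  induction b as [|b IH]; [rewrite Nat.add_0_r; simpl; lia|].
  rewrite Nat.add_succ_r. simpl. rewrite IH. lia.
Qed.

Lemma choose2_double s : (2 * choose2 s + s = s * s)%nat.
Proof. induction s; simpl; lia. Qed.

(* [qbinom p N k] is the Gaussian binomial coefficient [N, k]_p, given by the
   p-Pascal rule [N+1, k+1] = [N, k+1] + p^(N-k) [N, k]. *)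
Fixpoint qbinom (p : C) (N k : nat) : C :=
  match N, k with
  | _, O => 1
  | O, S _ => 0
  | S N', S k' => qbinom p N' (S k') + p ^ (N' - k') * qbinom p N' k'
  end.

Local Open Scope C_scope.

Lemma qbinom_0_r p N : qbinom p N 0 = 1.
Proof. now destruct N. Qed.

Lemma qbinom_SS p N k : qbinom p (S N) (S k) = qbinom p N (S k) + p ^ (N - k) * qbinom p N k.
Proof. reflexivity. Qed.

Lemma qbinom_gt p N k : (N < k)%nat -> qbinom p N k = 0.
Proof.
  revert k. induction N as [|N IH]; intros k Hk; destruct k as [|k]; try lia; [reflexivity|].
  rewrite qbinom_SS, !IH by lia. ring.
Qed.

Lemma qbinom_diag p N : qbinom p N N = 1.
Proof.
  induction N as [|N IH]; [reflexivity|].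
  rewrite qbinom_SS, qbinom_gt, IH, Nat.sub_diag by lia. simpl. ring.
Qed.

Lemma q_binomial (p x : C) N :
  qp (- x) p N = Csum (fun k => qbinom p N k * p ^ choose2 k * x ^ k) (S N).
Proof.
  induction N as [|N IH].
  - unfold qp. rewrite Cprod_0, Csum_S, Csum_0. simpl. ring.
  - rewrite qp_S, IH. symmetry.
    rewrite (Csum_Sl _ (S N)), qbinom_0_r.
    rewrite (Csum_ext (fun k => qbinom p (S N) (S k) * p ^ choose2 (S k) * x ^ S k)
      (fun k => qbinom p N (S k) * p ^ choose2 (S k) * x ^ S k
                + x * p ^ N * (qbinom p N k * p ^ choose2 k * x ^ k))).
    2: { intros k Hk. rewrite qbinom_SS. simpl choose2. rewrite !Cpow_add_r.
         replace (p ^ N) with (p ^ (N - k) * p ^ k) by (rewrite <- Cpow_add_r; f_equal; lia).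
         simpl. ring. }
    rewrite Csum_plus, Csum_mult_l.
    assert (Hshift : Csum (fun k => qbinom p N (S k) * p ^ choose2 (S k) * x ^ S k) (S N) =
                     Csum (fun k => qbinom p N k * p ^ choose2 k * x ^ k) (S N) - 1).
    { rewrite Csum_S, (qbinom_gt p N (S N)), (Csum_Sl (fun k => _) N), qbinom_0_r by lia.
      simpl. Cring. }
    rewrite Hshift. simpl. Cring.
Qed.

Lemma qbinom_qp (p : C) n k m : (k + m = n)%nat -> qbinom p n k * qp p p k * qp p p m = qp p p n.
Proof.
  revert k m. induction n as [|n IH]; intros k m H.
  - replace k with O by lia. replace m with O by lia. unfold qp. rewrite !Cprod_0. simpl. ring.
  - destruct k as [|k].
    + rewrite qbinom_0_r. simpl in H. subst. unfold qp at 1. rewrite Cprod_0. ring.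
    + destruct m as [|m].
      * replace (S k) with (S n) by lia. rewrite qbinom_diag. unfold qp at 2. rewrite Cprod_0. ring.
      * rewrite qbinom_SS. replace (n - k)%nat with (S m) by lia.
        pose proof (IH (S k) m ltac:(lia)) as I1. pose proof (IH k (S m) ltac:(lia)) as I2.
        rewrite !qp_S in *.
        replace (p ^ n) with (p ^ k * p ^ S m) by (rewrite <- Cpow_add_r; f_equal; lia).
        transitivity ((qbinom p n (S k) * (qp p p k * (1 - p * p ^ k)) * qp p p m) * (1 - p * p ^ m)
          + p ^ S m * (1 - p * p ^ k) * (qbinom p n k * qp p p k * (qp p p m * (1 - p * p ^ m)))).
        { ring. }
        rewrite I1, I2. simpl. ring.
Qed.

(** * Jacobi's triple product *)

Lemma Cprod_const (c : C) n : Cprod (fun _ => c) n = c ^ n.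
Proof. induction n as [|n IH]; [reflexivity|]. rewrite Cprod_S, IH. simpl. Cring. Qed.

Lemma Cprod_pow (p : C) n : Cprod (fun j => p ^ j) n = p ^ choose2 n.
Proof. induction n as [|n IH]; [reflexivity|]. rewrite Cprod_S, IH. simpl. rewrite Cpow_add_r. Cring. Qed.

Lemma qp_add (a p : C) n m : qp a p (n + m) = qp a p n * qp (a * p ^ n) p m.
Proof.
  unfold qp. rewrite Cprod_add. f_equal.
  apply Cprod_ext. intros k _. rewrite Cpow_add_r. ring.
Qed.

(* Read backwards, the factors are 1 + Y p^(n-1-j) = Y p^(n-1-j) (1 + x p^j). *)
Lemma qp_reflect (p Y x : C) n : p <> 0 -> Y * x * p ^ n = p ->
  qp (- Y) p n = qp (- x) p n * (Y ^ n * p ^ choose2 n).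
Proof.
  intros Hp HYx. unfold qp. rewrite Cprod_rev.
  rewrite (Cprod_ext _ (fun j => (1 - - x * p ^ j) * (Y * p ^ (n - S j)))).
  - rewrite Cprod_mult, (Cprod_mult (fun _ => Y)), Cprod_const, <- Cprod_pow, (Cprod_rev (fun j => p ^ j)).
    reflexivity.
  - intros j Hj.
    assert (E : Y * x * p ^ (n - S j) * p ^ j = 1).
    { apply (Cmult_eq_reg_l p); [exact Hp|].
      replace (p * (Y * x * p ^ (n - S j) * p ^ j)) with (Y * x * (p ^ S (n - S j + j))) by (rewrite Cpow_S, Cpow_add_r; ring).
      replace (S (n - S j + j)) with n by lia. rewrite HYx. ring. }
    transitivity (1 + Y * p ^ (n - S j)); [ring|].
    rewrite <- E at 1. ring.
Qed.

Lemma recentre_pos (p Y z : C) n j : Y * p ^ n = z ->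
  p ^ choose2 (n + j) * Y ^ (n + j) = (Y ^ n * p ^ choose2 n) * (z ^ j * p ^ choose2 j).
Proof. intros HY. rewrite choose2_add, !Cpow_add_r, Cpow_mult_r, <- HY, Cpow_mult_l. ring. Qed.

Lemma recentre_neg (p Y x : C) m s : p <> 0 -> Y * x * p ^ (m + s) = p ->
  p ^ choose2 m * Y ^ m = (Y ^ (m + s) * p ^ choose2 (m + s)) * (x ^ s * p ^ choose2 s).
Proof.
  intros Hp HY.
  assert (B : Y ^ s * x ^ s * p ^ (2 * choose2 s + m * s) = 1).
  { apply (Cmult_eq_reg_l (p ^ s)); [now apply Cpow_nz|].
    transitivity (Y ^ s * x ^ s * p ^ (2 * choose2 s + m * s + s)); [rewrite (Cpow_add_r p _ s); ring|].
    replace (2 * choose2 s + m * s + s)%nat with ((m + s) * s)%nat by (pose proof (choose2_double s); nia).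
    rewrite Cpow_mult_r, <- !Cpow_mult_l, HY. ring. }
  replace (2 * choose2 s + m * s)%nat with (choose2 s + choose2 s + m * s)%nat in B by lia.
  rewrite !Cpow_add_r in B. rewrite choose2_add, !Cpow_add_r.
  transitivity (p ^ choose2 m * Y ^ m * 1); [ring|]. rewrite <- B. ring.
Qed.

Lemma q_binomial_recentre (p Y z x : C) n : p <> 0 -> Y * p ^ n = z -> z * x = p ->
  Csum (fun k => qbinom p (2 * n) k * p ^ choose2 k * Y ^ k) (S (2 * n)) =
  Y ^ n * p ^ choose2 n *
  (Csum (fun k => qbinom p (2 * n) (n + k) * (z ^ k * p ^ choose2 k)) (S n) +
   Csum (fun j => qbinom p (2 * n) (n - S j) * (x ^ S j * p ^ choose2 (S j))) n).
Proof.
  intros Hp HY Hzx.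
  replace (S (2 * n)) with (n + S n)%nat by lia.
  rewrite Csum_add, Cmult_plus_distr_l, Cplus_comm, <- !Csum_mult_l. f_equal.
  - apply Csum_ext. intros k _.
    transitivity (qbinom p (2 * n) (n + k) * (p ^ choose2 (n + k) * Y ^ (n + k))); [ring|].
    rewrite (recentre_pos p Y z) by exact HY. ring.
  - rewrite Csum_rev. apply Csum_ext. intros j Hj.
    transitivity (qbinom p (2 * n) (n - S j) * (p ^ choose2 (n - S j) * Y ^ (n - S j))); [ring|].
    assert (HYx : Y * x * p ^ (n - S j + S j) = p).
    { replace (n - S j + S j)%nat with n by lia. transitivity (Y * p ^ n * x); [ring|]. now rewrite HY. }
    rewrite (recentre_neg p Y x (n - S j) (S j) Hp HYx).
    replace (n - S j + S j)%nat with n by lia. ring.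
Qed.

Lemma triple_product_finite (p z x : C) n : p <> 0 -> z <> 0 -> z * x = p ->
  qp (- z) p n * qp (- x) p n =
  Csum (fun k => qbinom p (2 * n) (n + k) * (z ^ k * p ^ choose2 k)) (S n) +
  Csum (fun j => qbinom p (2 * n) (n - S j) * (x ^ S j * p ^ choose2 (S j))) n.
Proof.
  intros Hp Hz Hzx.
  assert (Hpn : p ^ n <> 0) by now apply Cpow_nz.
  (* Apply the q-binomial theorem to z / p^n and recentre the sum. *)
  set (Y := z / p ^ n).
  assert (HY : Y * p ^ n = z) by (unfold Y; field; exact Hpn).
  assert (HY0 : Y <> 0) by (intro E; apply Hz; rewrite <- HY, E; ring).
  clearbody Y.
  assert (HW : Y ^ n * p ^ choose2 n <> 0) by (apply Cmult_neq_0; now apply Cpow_nz).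
  pose proof (q_binomial p Y (2 * n)) as Hq.
  rewrite (q_binomial_recentre p Y z x n Hp HY Hzx) in Hq.
  replace (qp (- Y) p (2 * n)) with (qp (- Y) p (n + n)) in Hq by (f_equal; lia).
  rewrite qp_add, (qp_reflect p Y x n Hp) in Hq
    by (transitivity (Y * p ^ n * x); [ring | now rewrite HY]).
  replace (- Y * p ^ n) with (- z) in Hq by (rewrite <- HY; ring).
  apply (Cmult_eq_reg_l (Y ^ n * p ^ choose2 n)); [exact HW|].
  rewrite <- Hq. ring.
Qed.

Lemma tannery (u : nat -> nat -> C) (v : nat -> C) L K s : (0 <= s < 1)%R ->
  (forall n k, (k <= n)%nat -> Cmod (u n k) <= K * s ^ k) ->
  (forall k, cv (fun n => u n k) (v k)) ->
  cv (Csum v) L ->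
  cv (fun n => Csum (u n) (S n)) L.
Proof.
  intros Hs Hu Hlim HL.
  assert (HK : (0 <= K)%R).
  { specialize (Hu O O (le_n O)). simpl in Hu. pose proof (Cmod_ge_0 (u O O)). lra. }
  assert (Hv : forall k, Cmod (v k) <= K * s ^ k).
  { intros k. apply (cv_Cmod_le _ _ _ k (Hlim k)). intros n Hn. apply Hu. lia. }
  set (f := fun n k => u n k - v k).
  assert (Hf : cv (fun n => Csum (f n) (S n)) 0).
  { intros eps He.
    destruct (mult_pow_lt_eventually (2 * K / (1 - s)) s (eps / 2) Hs) as [K0 HK0]; [lra|].
    specialize (HK0 K0 (le_n K0)).
    replace (2 * K / (1 - s) * s ^ K0)%R with (2 * K * s ^ K0 / (1 - s))%R in HK0 by (field; lra).
    assert (Hhead : cv (fun n => Csum (f n) K0) (Csum (fun _ => (0 : C)) K0)).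
    { apply cv_Csum. intros k _. unfold f. cbv beta. replace (0 : C) with (v k - v k) by ring.
      apply cv_minus; [apply Hlim | apply cv_const]. }
    rewrite Csum_eq0 in Hhead by (intros; reflexivity).
    destruct (Hhead (eps / 2)%R) as [N1 H1]; [lra|].
    exists (max N1 K0). intros n Hn. specialize (H1 n ltac:(lia)).
    replace (S n) with (K0 + (S n - K0))%nat by lia. rewrite Csum_add.
    replace (Csum (f n) K0 + Csum (fun k => f n (K0 + k)%nat) (S n - K0) - 0)
      with ((Csum (f n) K0 - 0) + Csum (fun k => f n (K0 + k)%nat) (S n - K0)) by Cring.
    eapply Rle_lt_trans; [apply Cmod_triangle|].
    enough (Cmod (Csum (fun k => f n (K0 + k)%nat) (S n - K0)) <= 2 * K * s ^ K0 / (1 - s))%R by lra.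
    eapply Rle_trans; [apply Cmod_Csum_le|].
    eapply Rle_trans; [|apply (Rsum_geom_tail_le (2 * K) s K0 (S n - K0)); lra].
    apply Rsum_le. intros k Hk. unfold f.
    eapply Rle_trans; [apply Cmod_triangle|]. rewrite Cmod_opp.
    pose proof (Hu n (K0 + k)%nat ltac:(lia)). pose proof (Hv (K0 + k)%nat). lra. }
  apply (cv_ext (fun n => Csum (f n) (S n) + Csum v (S n))).
  { intros n. unfold f. rewrite Csum_minus. ring. }
  replace L with (0 + L) by ring. apply cv_plus; [exact Hf|].
  apply (cv_comp _ _ S O); [intros; lia | exact HL].
Qed.

Lemma qbinom_bounded p : Cmod p < 1 ->
  exists B, (0 <= B)%R /\ forall N k, (k <= N)%nat -> Cmod (qbinom p N k) <= B.
Proof.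
  intros Hp.
  destruct (qp_bounded p p Hp) as [Ku [HKu Hup]].
  destruct (qp_lower_bound p p Hp Hp) as [cl [Hcl Hlow]].
  exists (Ku / (cl * cl))%R. split; [apply Rlt_le, Rdiv_lt_0_compat; nra|].
  intros N k Hk.
  (* [N, k] (p;p)_k (p;p)_(N-k) = (p;p)_N *)
  pose proof (f_equal Cmod (qbinom_qp p N k (N - k) ltac:(lia))) as E.
  rewrite !Cmod_mult in E.
  pose proof (Hlow k). pose proof (Hlow (N - k)%nat). pose proof (Hup N).
  pose proof (Cmod_ge_0 (qbinom p N k)).
  apply (Rmult_le_reg_r (cl * cl)); [nra|].
  unfold Rdiv. rewrite Rmult_assoc, Rinv_l, Rmult_1_r by nra.
  assert (Cmod (qbinom p N k) * (cl * cl) <= Cmod (qbinom p N k) * Cmod (qp p p k) * Cmod (qp p p (N - k)))%R.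
  { rewrite Rmult_assoc. apply Rmult_le_compat_l; [lra|]. apply Rmult_le_compat; lra. }
  lra.
Qed.

Lemma qbinom_cv p Pp (a b : nat -> nat) N0 : Cmod p < 1 -> cv (qp p p) Pp -> Pp <> 0 ->
  (forall n, (n >= N0)%nat -> (a n + b n = 2 * n)%nat) ->
  (forall n, (n - N0 <= a n)%nat) -> (forall n, (n - N0 <= b n)%nat) ->
  cv (fun n => qbinom p (2 * n) (a n)) (/ Pp).
Proof.
  intros Hp HP HP0 Hab Ha Hb.
  apply (cv_eventually_eq (fun n => qp p p (2 * n) * / (qp p p (a n) * qp p p (b n)))).
  { exists N0. intros n Hn. rewrite <- (qbinom_qp p (2 * n) (a n) (b n)) by auto.
    field. split; apply qp_neq_0; assumption. }
  replace (/ Pp) with (Pp * / (Pp * Pp)) by (field; exact HP0).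
  apply cv_mult; [apply (cv_comp _ _ _ O); [intros; lia | exact HP]|].
  apply cv_inv; [|now apply Cmult_neq_0].
  apply cv_mult; apply (cv_comp _ _ _ N0); assumption.
Qed.

Lemma triple_product (p z x Pp Pz Px Lz Lx : C) s :
  Cmod p < 1 -> p <> 0 -> z <> 0 -> z * x = p -> (0 <= s < 1)%R ->
  (forall k, Cmod (z ^ k * p ^ choose2 k) <= s ^ k) ->
  (forall k, Cmod (x ^ S k * p ^ choose2 (S k)) <= s ^ k) ->
  cv (qp p p) Pp -> cv (qp (- z) p) Pz -> cv (qp (- x) p) Px ->
  cv (Csum (fun k => z ^ k * p ^ choose2 k)) Lz ->
  cv (Csum (fun k => x ^ S k * p ^ choose2 (S k))) Lx ->
  Lz + Lx = Pp * Pz * Px.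
Proof.
  intros Hp Hp0 Hz Hzx Hs Bz Bx HPp HPz HPx HLz HLx.
  assert (HPp0 : Pp <> 0) by (apply (qp_lim_neq_0 p p); assumption).
  destruct (qbinom_bounded p Hp) as [B [HB HBb]].
  assert (Tz : cv (fun n => Csum (fun k => qbinom p (2 * n) (n + k) * (z ^ k * p ^ choose2 k)) (S n))
                  (/ Pp * Lz)).
  { apply (tannery _ (fun k => / Pp * (z ^ k * p ^ choose2 k)) _ B s Hs).
    - intros n k Hk. rewrite Cmod_mult.
      apply Rmult_le_compat; [apply Cmod_ge_0 | apply Cmod_ge_0 | apply HBb; lia | apply Bz].
    - intros k. apply cv_mult; [|apply cv_const].
      apply (qbinom_cv p Pp _ (fun n => n - k)%nat k); auto; intros; lia.
    - apply (cv_ext (fun n => / Pp * Csum (fun k => z ^ k * p ^ choose2 k) n)).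
      + intros n. now rewrite Csum_mult_l.
      + now apply cv_mult_l. }
  assert (Tx : cv (fun n => Csum (fun j => qbinom p (2 * n) (n - S j) * (x ^ S j * p ^ choose2 (S j))) n)
                  (/ Pp * Lx)).
  { apply (cv_ext (fun n => Csum (fun j => if Nat.ltb j n
                              then qbinom p (2 * n) (n - S j) * (x ^ S j * p ^ choose2 (S j))
                              else (0 : C)) (S n))); [intros n; apply Csum_ltb; lia|].
    apply (tannery _ (fun k => / Pp * (x ^ S k * p ^ choose2 (S k))) _ B s Hs).
    - intros n k Hk. destruct (Nat.ltb_spec k n).
      + rewrite Cmod_mult.
        apply Rmult_le_compat; [apply Cmod_ge_0 | apply Cmod_ge_0 | apply HBb; lia | apply Bx].
      + rewrite Cmod_0. apply Rmult_le_pos; [exact HB | apply pow_le; lra].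
    - intros k. apply (cv_eventually_eq (fun n => qbinom p (2 * n) (n - S k) * (x ^ S k * p ^ choose2 (S k)))).
      + exists (S k). intros n Hn. destruct (Nat.ltb_spec k n); [reflexivity | lia].
      + apply cv_mult; [|apply cv_const].
        apply (qbinom_cv p Pp _ (fun n => n + S k)%nat (S k)); auto; intros; lia.
    - apply (cv_ext (fun n => / Pp * Csum (fun k => x ^ S k * p ^ choose2 (S k)) n)).
      + intros n. now rewrite Csum_mult_l.
      + now apply cv_mult_l. }
  pose proof (cv_plus _ _ _ _ Tz Tx) as T.
  apply (cv_ext _ (fun n => qp (- z) p n * qp (- x) p n)) in T.
  2: { intros n. symmetry. now apply triple_product_finite. }
  pose proof (cv_unique _ _ _ T (cv_mult _ _ _ _ HPz HPx)) as U.
  rewrite <- Cmult_assoc, <- U. field. exact HPp0.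
Qed.

(** * Gauss's identities *)

Lemma qp_Sl (a p : C) n : qp a p (S n) = (1 - a) * qp (a * p) p n.
Proof.
  unfold qp. rewrite Cprod_Sl. simpl Cpow. f_equal; [ring|].
  apply Cprod_ext. intros k _. simpl. ring.
Qed.

Lemma qp_mult_opp (a p : C) n : qp a p n * qp (- a) p n = qp (a * a) (p * p) n.
Proof.
  unfold qp. rewrite <- Cprod_mult. apply Cprod_ext. intros k _.
  rewrite Cpow_mult_l. ring.
Qed.

Lemma qp_double (a p : C) n : qp a p (2 * n) = qp a (p * p) n * qp (a * p) (p * p) n.
Proof.
  unfold qp. rewrite Cprod_double, <- Cprod_mult. apply Cprod_ext. intros k _.
  rewrite Cpow_mult_l, Cpow_S. replace (2 * k)%nat with (k + k)%nat by lia.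
  rewrite Cpow_add_r. ring.
Qed.

Lemma Cmod_mult_lt_1 (q : C) : Cmod q < 1 -> Cmod (q * q) < 1.
Proof. intros Hq. rewrite Cmod_mult. pose proof (Cmod_ge_0 q). nra. Qed.

Lemma euler_odd_distinct (q P Q : C) : Cmod q < 1 ->
  cv (qp q (q * q)) P -> cv (qp (- q) q) Q -> P * Q = 1.
Proof.
  intros Hq HP HQ.
  destruct (qp_cv q q Hq) as [Pq HPq].
  destruct (qp_cv (q * q) (q * q) (Cmod_mult_lt_1 q Hq)) as [P1 H1].
  assert (E1 : P1 = Pq * Q).
  { apply (cv_unique _ _ _ H1). apply (cv_ext (fun n => qp q q n * qp (- q) q n)).
    - intros n. apply qp_mult_opp.
    - now apply cv_mult. }
  assert (E2 : Pq = P * P1).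
  { apply (cv_unique (fun n => qp q q (2 * n))); [apply (cv_comp _ _ _ O); [intros; lia | exact HPq]|].
    apply (cv_ext (fun n => qp q (q * q) n * qp (q * q) (q * q) n)).
    - intros n. symmetry. apply qp_double.
    - now apply cv_mult. }
  assert (HPq0 : Pq <> 0) by (now apply (qp_lim_neq_0 q q)).
  apply (Cmult_eq_reg_l Pq); [exact HPq0|].
  rewrite E2 at 2. rewrite E1. ring.
Qed.

Lemma triangular_series_triple_product (q A Pq Pmq : C) : Cmod q < 1 -> q <> 0 ->
  cv (Csum (fun k => q ^ choose2 (S k))) A -> cv (qp q q) Pq -> cv (qp (- q) q) Pmq ->
  A = Pq * Pmq * Pmq.
Proof.
  intros Hq Hq0 HA HPq HPmq.
  assert (Hr : (0 <= Cmod q < 1)%R) by (split; [apply Cmod_ge_0 | exact Hq]).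
  destruct (qp_cv (Copp 1) q Hq) as [Pm1 HPm1].
  assert (HAz : cv (Csum (fun k => q ^ k * q ^ choose2 k)) A).
  { apply (cv_ext (Csum (fun k => q ^ choose2 (S k)))); [|exact HA].
    intros n. apply Csum_ext. intros k _. rewrite <- Cpow_add_r. simpl. f_equal. lia. }
  assert (HAx : cv (Csum (fun k => 1 ^ S k * q ^ choose2 (S k))) A).
  { apply (cv_ext (Csum (fun k => q ^ choose2 (S k)))); [|exact HA].
    intros n. apply Csum_ext. intros k _. rewrite Cpow_1_l. ring. }
  (* The triple product at p = z = q, x = 1. *)
  pose proof (triple_product q q 1 Pq Pmq Pm1 A A (Cmod q) Hq Hq0 Hq0 ltac:(ring) Hr) as J.
  specialize (J ltac:(intros k; rewrite <- Cpow_add_r, Cmod_pow; apply pow_le_antimono; [lra | lia])).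
  specialize (J ltac:(intros k; rewrite Cpow_1_l, Cmult_1_l, Cmod_pow; apply pow_le_antimono; [lra | simpl; lia])).
  specialize (J HPq HPmq HPm1 HAz HAx).
  assert (EPm1 : Pm1 = 2 * Pmq).
  { apply (cv_unique (fun n => qp (Copp 1) q (S n))); [apply (cv_comp _ _ S O); [intros; lia | exact HPm1]|].
    apply (cv_ext (fun n => 2 * qp (- q) q n)); [|now apply cv_mult_l].
    intros n. rewrite qp_Sl. f_equal; [ring|]. f_equal. ring. }
  apply (Cmult_eq_reg_l 2); [intro E; apply (f_equal fst) in E; simpl in E; lra|].
  transitivity (A + A); [ring|]. rewrite J, EPm1. ring.
Qed.

Lemma gauss_triangular (q A P1 P2 : C) : Cmod q < 1 ->
  cv (Csum (fun k => q ^ choose2 (S k))) A ->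
  cv (qp (q * q) (q * q)) P1 -> cv (qp q (q * q)) P2 ->
  A * P2 = P1.
Proof.
  intros Hq HA H1 H2.
  destruct (Ceq_dec q 0) as [->|Hq0].
  - replace (0 * 0) with (RtoC 0) in * by ring.
    assert (E1 : P1 = 1) by (apply (cv_eventually_const_unique _ _ _ H1); exists O; intros; apply qp_0_l).
    assert (E2 : P2 = 1) by (apply (cv_eventually_const_unique _ _ _ H2); exists O; intros; apply qp_0_l).
    assert (EA : A = 1).
    { apply (cv_eventually_const_unique _ _ _ HA). exists 1%nat.
      intros [|n] Hn; [lia|]. rewrite Csum_Sl, Csum_eq0; [rewrite Cplus_0_r; reflexivity|]. intros k _.
      replace (choose2 (S (S k))) with (S (choose2 k + k + k)) by (simpl; lia). rewrite Cpow_S. ring. }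
    rewrite E1, E2, EA. ring.
  - destruct (qp_cv q q Hq) as [Pq HPq].
    destruct (qp_cv (- q) q Hq) as [Pmq HPmq].
    rewrite (triangular_series_triple_product q A Pq Pmq Hq Hq0 HA HPq HPmq).
    assert (E1 : P1 = Pq * Pmq).
    { apply (cv_unique _ _ _ H1). apply (cv_ext (fun n => qp q q n * qp (- q) q n)).
      - intros n. apply qp_mult_opp.
      - now apply cv_mult. }
    rewrite E1. transitivity (Pq * Pmq * (P2 * Pmq)); [ring|].
    rewrite (euler_odd_distinct q P2 Pmq Hq H2 HPmq). ring.
Qed.

Lemma theta_term (q : C) j :
  (- (q * q)) ^ j * ((q * q) * (q * q)) ^ choose2 j = (-1) ^ j * q ^ (2 * j * j).
Proof.
  replace (- (q * q)) with (-1 * q ^ 2) by (simpl; ring).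
  replace ((q * q) * (q * q)) with (q ^ 4) by (simpl; ring).
  rewrite Cpow_mult_l, <- !Cpow_mult_r, <- Cmult_assoc, <- Cpow_add_r.
  do 2 f_equal. pose proof (choose2_double j). nia.
Qed.

Lemma theta_series_triple_product (q B Q4 R2 : C) : Cmod q < 1 -> q <> 0 ->
  cv (Csum (fun k => (-1) ^ S k * q ^ (2 * S k * S k))) B ->
  cv (qp ((q * q) * (q * q)) ((q * q) * (q * q))) Q4 -> cv (qp (q * q) ((q * q) * (q * q))) R2 ->
  1 + 2 * B = Q4 * R2 * R2.
Proof.
  intros Hq Hq0 HB HQ4 HR2.
  assert (Hr : (0 <= Cmod q < 1)%R) by (split; [apply Cmod_ge_0 | exact Hq]).
  set (p := (q * q) * (q * q)) in *. set (z := - (q * q)).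
  assert (Hp : Cmod p < 1) by (now apply Cmod_mult_lt_1, Cmod_mult_lt_1).
  assert (Hp0 : p <> 0) by (unfold p; repeat apply Cmult_neq_0; auto).
  assert (Hz0 : z <> 0).
  { intro E. apply (Cmult_neq_0 q q Hq0 Hq0). transitivity (- z); [unfold z; ring|]. rewrite E. ring. }
  assert (HR2' : cv (qp (- z) p) R2) by (replace (- z) with (q * q) by (unfold z; ring); exact HR2).
  assert (Bterm : forall k, Cmod (z ^ k * p ^ choose2 k) <= Cmod q ^ k).
  { intros k. unfold z, p. rewrite theta_term, Cmod_mult, Cmod_m1_pow, Rmult_1_l, Cmod_pow.
    apply pow_le_antimono; [lra | nia]. }
  assert (Hz : cv (Csum (fun k => z ^ k * p ^ choose2 k)) (1 + B)).
  { apply cv_of_cv_S. apply (cv_ext (fun n => 1 + Csum (fun k => (-1) ^ S k * q ^ (2 * S k * S k)) n)).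
    - intros n. rewrite Csum_Sl. unfold z, p. rewrite theta_term. f_equal; [simpl; ring|].
      apply Csum_ext. intros k _. now rewrite theta_term.
    - apply cv_plus; [apply cv_const | exact HB]. }
  assert (Hx : cv (Csum (fun k => z ^ S k * p ^ choose2 (S k))) B).
  { apply (cv_ext (Csum (fun k => (-1) ^ S k * q ^ (2 * S k * S k)))); [|exact HB].
    intros n. apply Csum_ext. intros k _. unfold z, p. now rewrite theta_term. }
  (* The triple product at p = q^4, z = x = -q^2. *)
  replace (1 + 2 * B) with (1 + B + B) by ring.
  apply (triple_product p z z Q4 R2 R2 (1 + B) B (Cmod q) Hp Hp0 Hz0 ltac:(unfold z, p; ring) Hr
    Bterm ltac:(intros k; eapply Rle_trans; [apply Bterm | apply pow_le_antimono; [lra | lia]])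
    HQ4 HR2' HR2' Hz Hx).
Qed.

Lemma gauss_squares (q B P1 P3 : C) : Cmod q < 1 ->
  cv (Csum (fun k => (-1) ^ S k * q ^ (2 * S k * S k))) B ->
  cv (qp (q * q) (q * q)) P1 -> cv (qp (- (q * q)) (q * q)) P3 ->
  (1 + 2 * B) * P3 = P1.
Proof.
  intros Hq HB H1 H3.
  destruct (Ceq_dec q 0) as [->|Hq0].
  - replace (- (0 * 0)) with (RtoC 0) in * by ring. replace (0 * 0) with (RtoC 0) in * by ring.
    assert (E1 : P1 = 1) by (apply (cv_eventually_const_unique _ _ _ H1); exists O; intros; apply qp_0_l).
    assert (E3 : P3 = 1) by (apply (cv_eventually_const_unique _ _ _ H3); exists O; intros; apply qp_0_l).
    assert (EB : B = 0).
    { apply (cv_eventually_const_unique _ _ _ HB). exists O. intros n _.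
      apply Csum_eq0. intros k _. replace (2 * S k * S k)%nat with (S (2 * k * S k + S k + k)) by lia.
      rewrite (Cpow_S 0). ring. }
    rewrite E1, E3, EB. ring.
  - pose proof (Cmod_mult_lt_1 q Hq) as Hqq.
    destruct (qp_cv ((q * q) * (q * q)) ((q * q) * (q * q)) (Cmod_mult_lt_1 _ Hqq)) as [Q4 HQ4].
    destruct (qp_cv (q * q) ((q * q) * (q * q)) (Cmod_mult_lt_1 _ Hqq)) as [R2 HR2].
    rewrite (theta_series_triple_product q B Q4 R2 Hq Hq0 HB HQ4 HR2).
    assert (E : Q4 = P1 * P3).
    { apply (cv_unique _ _ _ HQ4). apply (cv_ext (fun n => qp (q * q) (q * q) n * qp (- (q * q)) (q * q) n)).
      - intros n. apply qp_mult_opp.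
      - now apply cv_mult. }
    rewrite E. transitivity (P1 * (R2 * P3) * (R2 * P3)); [ring|].
    rewrite (euler_odd_distinct (q * q) R2 P3 Hqq HR2 H3). ring.
Qed.

(** * The double series *)

Lemma CpowZ_of_nat (z : C) k : CpowZ z (Z.of_nat k) = z ^ k.
Proof. destruct k; [reflexivity|]. simpl. now rewrite SuccNat2Pos.id_succ, CpowE. Qed.

Lemma CpowZ_opp_S (z : C) b : CpowZ z (- Z.of_nat (S b)) = / z ^ S b.
Proof. simpl. now rewrite SuccNat2Pos.id_succ, CinvE, CpowE. Qed.

Lemma Copp_Cone : Defs.Copp Cone = (-1 : C).
Proof. apply injective_projections; simpl; ring. Qed.

Lemma expo_double n m : (2 * expo n m = n * (n + 3) + 4 * n * m + 4 * m * (m + 1))%Z.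
Proof.
  unfold expo.
  assert (Heven : ((n * (n + 3)) mod 2 = 0)%Z).
  { destruct (Z.Even_or_Odd n) as [[k ->]|[k ->]].
    - replace (2 * k * (2 * k + 3))%Z with (k * (2 * k + 3) * 2)%Z by ring. apply Z.mod_mul. lia.
    - replace ((2 * k + 1) * (2 * k + 1 + 3))%Z with ((2 * k + 1) * (k + 2) * 2)%Z by ring.
      apply Z.mod_mul. lia. }
  pose proof (Z_div_exact_full_2 (n * (n + 3)) 2 ltac:(lia) Heven). lia.
Qed.

Definition term_pos (q : C) (n m : nat) : C := term q (Z.of_nat n) (Z.of_nat m).
Definition term_neg (q : C) (a b : nat) : C := term q (- Z.of_nat (S a)) (- Z.of_nat (S b)).

Lemma term_pos_eval (q : C) n m e : Z.of_nat e = expo (Z.of_nat n) (Z.of_nat m) ->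
  term_pos q n m = (-1) ^ m * q ^ e.
Proof. intros He. unfold term_pos, term. now rewrite <- He, !CpowZ_of_nat, Copp_Cone. Qed.

Lemma term_neg_eval (q : C) a b e : Z.of_nat e = expo (- Z.of_nat (S a)) (- Z.of_nat (S b)) ->
  term_neg q a b = (-1) ^ S b * q ^ e.
Proof.
  intros He. unfold term_neg, term. rewrite <- He, CpowZ_of_nat, CpowZ_opp_S, Copp_Cone, Cinv_m1_pow.
  reflexivity.
Qed.

Lemma Cmod_term_pos_le (q : C) n m : Cmod q < 1 -> Cmod (term_pos q n m) <= Cmod q ^ (n + 2 * m).
Proof.
  intros Hq. pose proof (expo_double (Z.of_nat n) (Z.of_nat m)).
  rewrite (term_pos_eval q n m (Z.to_nat (expo (Z.of_nat n) (Z.of_nat m)))) by (rewrite Z2Nat.id; nia).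
  rewrite Cmod_mult, Cmod_m1_pow, Rmult_1_l, Cmod_pow.
  apply pow_le_antimono; [pose proof (Cmod_ge_0 q); lra | nia].
Qed.

Lemma Cmod_term_neg_le (q : C) a b : Cmod q < 1 -> Cmod (term_neg q a b) <= Cmod q ^ (a + 2 * b).
Proof.
  intros Hq. pose proof (expo_double (- Z.of_nat (S a)) (- Z.of_nat (S b))).
  rewrite (term_neg_eval q a b (Z.to_nat (expo (- Z.of_nat (S a)) (- Z.of_nat (S b))))) by (rewrite Z2Nat.id; nia).
  rewrite Cmod_mult, Cmod_m1_pow, Rmult_1_l, Cmod_pow.
  apply pow_le_antimono; [pose proof (Cmod_ge_0 q); lra | nia].
Qed.

Definition weight_sum (u : nat -> nat -> C) (r : nat) : C :=
  Csum (fun m => u (r - 2 * m)%nat m) (Nat.div2 r + 1).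

Lemma Csum_square_embed (u : nat -> nat -> C) N M : (N <= M)%nat ->
  Csum (fun n => Csum (fun m => u n m) N) N =
  Csum (fun n => Csum (fun m => if andb (Nat.ltb n N) (Nat.ltb m N) then u n m else (0 : C)) M) M.
Proof.
  intros HNM. rewrite <- (Csum_ltb _ N M HNM). apply Csum_ext. intros n _.
  destruct (Nat.ltb_spec n N); simpl.
  - symmetry. now apply Csum_ltb.
  - symmetry. now apply Csum_eq0.
Qed.

Lemma Csum_weight_embed (u : nat -> nat -> C) M :
  Csum (weight_sum u) M =
  Csum (fun n => Csum (fun m => if Nat.ltb (n + 2 * m) M then u n m else (0 : C)) M) M.
Proof.
  transitivity (Csum (fun r => Csum (fun m => if Nat.leb (2 * m) r then u (r - 2 * m)%nat m else (0 : C)) M) M).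
  - apply Csum_ext. intros r Hr. unfold weight_sum.
    rewrite <- (Csum_ltb _ (Nat.div2 r + 1) M).
    + apply Csum_ext. intros m _. pose proof (Nat.div2_odd r) as Hd.
      destruct (Nat.ltb_spec m (Nat.div2 r + 1)), (Nat.leb_spec (2 * m) r);
        solve [reflexivity | destruct (Nat.odd r); simpl in Hd; lia].
    + pose proof (Nat.div2_odd r). destruct (Nat.odd r); simpl in *; lia.
  - rewrite Csum_comm, (Csum_comm (fun n m => if Nat.ltb (n + 2 * m) M then u n m else 0)).
    apply Csum_ext. intros m _. apply (Csum_shift_index (fun n => u n m)).
Qed.

Lemma square_minus_weight_term_le (u : nat -> nat -> C) s N n m : (0 <= s < 1)%R ->
  Cmod (u n m) <= (s * s) ^ (n + 2 * m) ->
  Cmod ((if andb (Nat.ltb n N) (Nat.ltb m N) then u n m else 0) -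
        (if Nat.ltb (n + 2 * m) (2 * N) then u n m else 0)) <= s ^ N * s ^ n * s ^ m.
Proof.
  intros Hs Hu.
  (* The two truncations differ only at terms with n + 2m >= N. *)
  assert (Hfar : (n + 2 * m >= N)%nat -> Cmod (u n m) <= s ^ N * s ^ n * s ^ m).
  { intros HN. eapply Rle_trans; [apply Hu|].
    rewrite Rpow_mult_distr, <- pow_add, <- !pow_add.
    apply pow_le_antimono; [lra | lia]. }
  pose proof (pow_le s N). pose proof (pow_le s n). pose proof (pow_le s m).
  assert (0 <= s ^ N * s ^ n * s ^ m)%R by (apply Rmult_le_pos; [apply Rmult_le_pos|]; lra).
  destruct (Nat.ltb_spec n N), (Nat.ltb_spec m N), (Nat.ltb_spec (n + 2 * m) (2 * N)); simpl.
  all: first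
    [ replace (u n m - u n m) with (RtoC 0) by ring; rewrite Cmod_0; assumption
    | replace (RtoC 0 - RtoC 0) with (RtoC 0) by ring; rewrite Cmod_0; assumption
    | replace (u n m - 0) with (u n m) by ring; apply Hfar; lia
    | replace (0 - u n m) with (- u n m) by ring; rewrite Cmod_opp; apply Hfar; lia ].
Qed.

Lemma square_minus_weight_le (u : nat -> nat -> C) s N : (0 <= s < 1)%R ->
  (forall n m, Cmod (u n m) <= (s * s) ^ (n + 2 * m)) ->
  Cmod (Csum (fun n => Csum (fun m => u n m) N) N - Csum (weight_sum u) (2 * N))
  <= s ^ N * (/ (1 - s) * / (1 - s)).
Proof.
  intros Hs Hu. set (M := (2 * N)%nat).
  rewrite (Csum_square_embed u N M), Csum_weight_embed by (unfold M; lia).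
  rewrite <- Csum_minus.
  rewrite (Csum_ext _ (fun n => Csum (fun m =>
      (if andb (Nat.ltb n N) (Nat.ltb m N) then u n m else 0) -
      (if Nat.ltb (n + 2 * m) M then u n m else 0)) M)) by (intros; now rewrite Csum_minus).
  eapply Rle_trans; [apply Cmod_Csum_le|].
  eapply Rle_trans.
  { apply Rsum_le. intros n _. eapply Rle_trans; [apply Cmod_Csum_le|].
    apply (Rsum_le _ (fun m => s ^ N * s ^ n * s ^ m)%R). intros m _.
    now apply square_minus_weight_term_le. }
  rewrite (Rsum_ext _ (fun n => (s ^ N * s ^ n) * Rsum (fun m => s ^ m) M)%R)
    by (intros; apply Rsum_mult_l).
  rewrite (Rsum_ext _ (fun n => (s ^ N * Rsum (fun m => s ^ m) M) * s ^ n)%R)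
    by (intros; ring).
  rewrite Rsum_mult_l, Rmult_assoc.
  apply Rmult_le_compat_l; [apply pow_le; lra|].
  pose proof (Rsum_geom_le s M Hs).
  assert (0 <= Rsum (fun m => s ^ m) M)%R by (apply Rsum_nonneg; intros; apply pow_le; lra).
  apply Rmult_le_compat; assumption.
Qed.

(* Within a weight, the exponent decreases (resp. increases) by one as m grows. *)

Lemma weight_pos_even (q : C) K :
  weight_sum (term_pos q) (2 * K) = Csum (fun m => (-1) ^ m * q ^ (2 * K * K + 3 * K - m)) (S K).
Proof.
  unfold weight_sum. rewrite Nat.div2_double, Nat.add_1_r. apply Csum_ext. intros m Hm.
  apply term_pos_eval. pose proof (expo_double (Z.of_nat (2 * K - 2 * m)) (Z.of_nat m)). nia.
Qed.

Lemma weight_pos_odd (q : C) K :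
  weight_sum (term_pos q) (S (2 * K)) = Csum (fun m => (-1) ^ m * q ^ (2 * K * K + 5 * K + 2 - m)) (S K).
Proof.
  unfold weight_sum. rewrite Nat.div2_succ_double, Nat.add_1_r. apply Csum_ext. intros m Hm.
  apply term_pos_eval. pose proof (expo_double (Z.of_nat (S (2 * K) - 2 * m)) (Z.of_nat m)). nia.
Qed.

Lemma weight_neg_even (q : C) K :
  weight_sum (term_neg q) (2 * K) = Csum (fun b => (-1) ^ S b * q ^ (2 * K * K + 3 * K + b + 1)) (S K).
Proof.
  unfold weight_sum. rewrite Nat.div2_double, Nat.add_1_r. apply Csum_ext. intros b Hb.
  apply term_neg_eval. pose proof (expo_double (- Z.of_nat (S (2 * K - 2 * b))) (- Z.of_nat (S b))). nia.
Qed.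

Lemma weight_neg_odd (q : C) K :
  weight_sum (term_neg q) (S (2 * K)) =
  Csum (fun b => (-1) ^ S b * q ^ (2 * K * K + 5 * K + 2 + b + 1)) (S K).
Proof.
  unfold weight_sum. rewrite Nat.div2_succ_double, Nat.add_1_r. apply Csum_ext. intros b Hb.
  apply term_neg_eval. pose proof (expo_double (- Z.of_nat (S (S (2 * K) - 2 * b))) (- Z.of_nat (S b))). nia.
Qed.

Lemma alternating_down_telescope (q : C) e K : (K <= e)%nat ->
  (1 + q) * Csum (fun m => (-1) ^ m * q ^ (e - m)) (S K) = q ^ S e + (-1) ^ K * q ^ (e - K).
Proof.
  induction K as [|K IH]; intros HK.
  - rewrite Csum_S, Csum_0, Nat.sub_0_r. simpl. ring.
  - rewrite Csum_S, Cmult_plus_distr_l, IH by lia.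
    replace (e - K)%nat with (S (e - S K)) by lia. rewrite !Cpow_S. ring.
Qed.

Lemma alternating_up_telescope (q : C) e K :
  (1 + q) * Csum (fun b => (-1) ^ S b * q ^ (e + b + 1)) (S K) =
  - (q ^ S e + (-1) ^ K * q ^ (e + K + 2)).
Proof.
  induction K as [|K IH].
  - rewrite Csum_S, Csum_0. replace (e + 0 + 1)%nat with (S e) by lia.
    replace (e + 0 + 2)%nat with (S (S e)) by lia. simpl. ring.
  - rewrite Csum_S, Cmult_plus_distr_l, IH.
    replace (e + S K + 1)%nat with (e + K + 2)%nat by lia.
    replace (e + S K + 2)%nat with (S (e + K + 2)) by lia. rewrite !Cpow_S. ring.
Qed.

Lemma weight_block_telescope (q : C) K :
  (1 + q) * (weight_sum (term_pos q) (2 * K) + weight_sum (term_pos q) (S (2 * K))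
             - (weight_sum (term_neg q) (2 * K) + weight_sum (term_neg q) (S (2 * K)))) =
  2 * q ^ choose2 (S (S (2 * K))) + 2 * q ^ choose2 (S (S (S (2 * K)))) +
  (-1) ^ K * (q ^ (2 * K * (K + 1)) + 2 * q ^ (2 * (K + 1) * (K + 1)) + q ^ (2 * (K + 1) * (K + 2))).
Proof.
  rewrite weight_pos_even, weight_pos_odd, weight_neg_even, weight_neg_odd.
  match goal with
  | |- ?f * (?a + ?b - (?c + ?d)) = _ =>
      transitivity (f * a + f * b - (f * c + f * d)); [ring|]
  end.
  rewrite !alternating_down_telescope, !alternating_up_telescope by nia.
  pose proof (choose2_double (S (S (2 * K)))). pose proof (choose2_double (S (S (S (2 * K))))).
  replace (choose2 (S (S (2 * K)))) with (S (2 * K * K + 3 * K)) by nia.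
  replace (choose2 (S (S (S (2 * K))))) with (S (2 * K * K + 5 * K + 2)) by nia.
  replace (2 * K * K + 3 * K - K)%nat with (2 * K * (K + 1))%nat by nia.
  replace (2 * K * K + 5 * K + 2 - K)%nat with (2 * (K + 1) * (K + 1))%nat by nia.
  replace (2 * K * K + 3 * K + K + 2)%nat with (2 * (K + 1) * (K + 1))%nat by nia.
  replace (2 * K * K + 5 * K + 2 + K + 2)%nat with (2 * (K + 1) * (K + 2))%nat by nia.
  ring.
Qed.

Definition weight_partial (q : C) (N : nat) : C :=
  Csum (weight_sum (term_pos q)) (2 * N) - Csum (weight_sum (term_neg q)) (2 * N).

Lemma weight_partial_closed_form (q : C) N :
  (1 + q) * weight_partial q N =
  2 * (Csum (fun k => q ^ choose2 (S k)) (S (2 * N)) - 1) + 1 - (-1) ^ N * q ^ (2 * N * (N + 1))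
  - 2 * Csum (fun k => (-1) ^ S k * q ^ (2 * S k * S k)) N.
Proof.
  induction N as [|N IH].
  - unfold weight_partial. rewrite !Csum_S, !Csum_0. simpl. Cring.
  - unfold weight_partial in *.
    replace (2 * S N * (S N + 1))%nat with (2 * (N + 1) * (N + 2))%nat by lia.
    replace (2 * S N)%nat with (S (S (2 * N))) by lia.
    rewrite !(Csum_S (weight_sum _)).
    transitivity ((1 + q) * (Csum (weight_sum (term_pos q)) (2 * N) - Csum (weight_sum (term_neg q)) (2 * N))
      + (1 + q) * (weight_sum (term_pos q) (2 * N) + weight_sum (term_pos q) (S (2 * N))
             - (weight_sum (term_neg q) (2 * N) + weight_sum (term_neg q) (S (2 * N))))); [Cring|].
    rewrite IH, weight_block_telescope, !(Csum_S (fun k => q ^ choose2 (S k))),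
      (Csum_S (fun k => (-1) ^ S k * q ^ _)), (Cpow_S (-1) N).
    replace (2 * S N * S N)%nat with (2 * (N + 1) * (N + 1))%nat by lia.
    Cring.
Qed.

Lemma partial_diff_minus_weight_partial_cv (q : C) : Cmod q < 1 ->
  cv (fun N => partial_diff q N - weight_partial q N) 0.
Proof.
  intros Hq. set (s := sqrt (Cmod q)).
  assert (Hs : (0 <= s < 1)%R).
  { split; [apply sqrt_pos|]. unfold s. rewrite <- sqrt_1. apply sqrt_lt_1_alt.
    pose proof (Cmod_ge_0 q). lra. }
  assert (Hss : (s * s = Cmod q)%R) by (apply sqrt_sqrt, Cmod_ge_0).
  apply (cv_geom_rate _ _ (2 * (/ (1 - s) * / (1 - s))) s Hs). intros N.
  pose proof (square_minus_weight_le (term_pos q) s N Hs) as Epos.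
  pose proof (square_minus_weight_le (term_neg q) s N Hs) as Eneg.
  specialize (Epos ltac:(intros; rewrite Hss; now apply Cmod_term_pos_le)).
  specialize (Eneg ltac:(intros; rewrite Hss; now apply Cmod_term_neg_le)).
  change (partial_diff q N) with
    (Csum (fun n => Csum (fun m => term_pos q n m) N) N - Csum (fun n => Csum (fun m => term_neg q n m) N) N).
  unfold weight_partial.
  match goal with
  | |- Cmod (?a - ?b - (?c - ?d) - _) <= _ =>
      replace (a - b - (c - d) - 0) with ((a - c) - (b - d)) by Cring
  end.
  eapply Rle_trans; [apply Cmod_triangle|]. rewrite Cmod_opp. lra.
Qed.

Lemma weight_partial_cv (q A B : C) : Cmod q < 1 ->
  cv (Csum (fun k => q ^ choose2 (S k))) A ->
  cv (Csum (fun k => (-1) ^ S k * q ^ (2 * S k * S k))) B ->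
  cv (weight_partial q) ((2 * A - (1 + 2 * B)) / (1 + q)).
Proof.
  intros Hq HA HB. pose proof (Cplus_1_neq_0 q Hq) as Hq1.
  assert (Hr : (0 <= Cmod q < 1)%R) by (split; [apply Cmod_ge_0 | exact Hq]).
  assert (Hvanish : cv (fun N => (-1) ^ N * q ^ (2 * N * (N + 1))) 0).
  { apply (cv_geom_rate _ _ 1 (Cmod q) Hr). intros N.
    replace (_ - 0) with ((-1) ^ N * q ^ (2 * N * (N + 1))) by ring.
    rewrite Cmod_mult, Cmod_m1_pow, Cmod_pow, !Rmult_1_l.
    apply pow_le_antimono; [lra | nia]. }
  apply (cv_ext (fun N => / (1 + q) * ((1 + q) * weight_partial q N))).
  { intros N. field. exact Hq1. }
  replace ((2 * A - (1 + 2 * B)) / (1 + q)) with (/ (1 + q) * (2 * (A - 1) + 1 - 0 - 2 * B))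
    by (field; exact Hq1).
  apply cv_mult_l.
  apply (cv_ext _ _ _ (fun N => eq_sym (weight_partial_closed_form q N))).
  repeat apply cv_minus; [| exact Hvanish | apply cv_mult_l; exact HB].
  apply cv_plus; [|apply cv_const]. apply cv_mult_l. apply cv_minus; [|apply cv_const].
  apply (cv_comp _ _ _ O); [intros; lia | exact HA].
Qed.

Lemma partial_diff_cv (q A B : C) : Cmod q < 1 ->
  cv (Csum (fun k => q ^ choose2 (S k))) A ->
  cv (Csum (fun k => (-1) ^ S k * q ^ (2 * S k * S k))) B ->
  cv (partial_diff q) ((2 * A - (1 + 2 * B)) / (1 + q)).
Proof.
  intros Hq HA HB.
  apply (cv_ext (fun N => partial_diff q N - weight_partial q N + weight_partial q N)); [intros; ring|].
  rewrite <- (Cplus_0_l (_ / _)).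
  apply cv_plus; [now apply partial_diff_minus_weight_partial_cv | now apply weight_partial_cv].
Qed.

Lemma triangular_series_cv (q : C) : Cmod q < 1 -> exists A, cv (Csum (fun k => q ^ choose2 (S k))) A.
Proof.
  intros Hq. apply (cv_series_geom_bound _ 1 (Cmod q)); [split; [apply Cmod_ge_0 | exact Hq]|].
  intros k. rewrite Cmod_pow, Rmult_1_l. apply pow_le_antimono; [pose proof (Cmod_ge_0 q); lra | simpl; lia].
Qed.

Lemma theta_series_cv (q : C) : Cmod q < 1 ->
  exists B, cv (Csum (fun k => (-1) ^ S k * q ^ (2 * S k * S k))) B.
Proof.
  intros Hq. apply (cv_series_geom_bound _ 1 (Cmod q)); [split; [apply Cmod_ge_0 | exact Hq]|].
  intros k. rewrite Cmod_mult, Cmod_m1_pow, Cmod_pow, !Rmult_1_l.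
  apply pow_le_antimono; [pose proof (Cmod_ge_0 q); lra | nia].
Qed.

Lemma qpoch_inf_is_of_cv (a b P : C) : cv (qp a b) P -> qpoch_inf_is a b P.
Proof.
  intros H. apply Ccv_of_cv. apply (cv_ext (qp a b)); [|exact H].
  intros n. symmetry. apply qpochE.
Qed.

Import Pilot.Defs.
Close Scope C_scope.

Theorem mainTheorem6 (q : Cx) (hq : Cnorm q < 1) :
  exists P1 P2 P3 : Cx,
    qpoch_inf_is (Cmul q q) (Cmul q q) P1 /\
    qpoch_inf_is q (Cmul q q) P2 /\
    qpoch_inf_is (Copp (Cmul q q)) (Cmul q q) P3 /\
    Ccv (partial_diff q)
      (Csub (Cdiv (Cmul (RtoC 2) P1) (Cmul (Cadd Cone q) P2))
            (Cdiv P1 (Cmul (Cadd Cone q) P3))).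
Proof.
  rewrite CnormE in hq. pose proof (Cmod_mult_lt_1 q hq) as Hqq.
  destruct (qp_cv (q * q) (q * q) Hqq) as [P1 H1].
  destruct (qp_cv q (q * q) Hqq) as [P2 H2].
  destruct (qp_cv (- (q * q)) (q * q) Hqq) as [P3 H3].
  exists P1, P2, P3.
  split; [|split; [|split]]; try now apply qpoch_inf_is_of_cv.
  destruct (triangular_series_cv q hq) as [A HA].
  destruct (theta_series_cv q hq) as [B HB].
  assert (HP2 : P2 <> 0%C) by (now apply (qp_lim_neq_0 q (q * q))).
  assert (HP3 : P3 <> 0%C) by (apply (qp_lim_neq_0 (- (q * q)) (q * q)); rewrite ?Cmod_opp; assumption).
  pose proof (Cplus_1_neq_0 q hq) as Hq1.
  apply Ccv_of_cv. rewrite !CdivE.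
  replace (Csub _ _) with (2 * (A * P2) / ((1 + q) * P2) - (1 + 2 * B) * P3 / ((1 + q) * P3))%C
    by now rewrite (gauss_triangular q A P1 P2), (gauss_squares q B P1 P3).
  replace (2 * (A * P2) / ((1 + q) * P2) - (1 + 2 * B) * P3 / ((1 + q) * P3))%C
    with ((2 * A - (1 + 2 * B)) / (1 + q))%C by (field; auto).
  now apply partial_diff_cv.
Qed.
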